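(* Assume $d=p+q-2r=0$ and let $\lambda,\mu\in\mathbb R$, $\delta=\mu-\lambda$. For every $t\in\mathbb R$, the map $Q:\mathcal S^1_\delta\to\mathcal D_{\lambda,\mu}$, $Q(S)=Q_{\mathrm{Aff}}\big(S+t\,\mathrm{div}(S)\big)$, satisfies $\mathcal L_{X^h}(Q(S))=Q(\mathrm L_{X^h}S)$ for all $S\in\mathcal S^1_\delta$ and all $h\in\mathfrak{osp}(p+1,q+1|2r)$; i.e. it defines an $\mathfrak{osp}(p+1,q+1|2r)$-equivariant quantization on symbols of degree one.
   Context: On $\mathbb R^{p+q|2r}$ use coordinates $y^1,\dots,y^{p+q+2r}$ ($y^i$ even iff $i\le p+q$); $\tilde i=0$ if $i\le p+q$, $1$ otherwise. $\mathcal F=C^\infty(\mathbb R^{p+q|2r})$; $(e_i)$ standard basis, $(\varepsilon^i)$ dual basis. $\omega_0(U,V)=V^tG_0U$, $G_0=\mathrm{diag}(\mathrm{Id}_p,-\mathrm{Id}_q,J)$, $J=\begin{pmatrix}0&\mathrm{Id}_r\\-\mathrm{Id}_r&0\end{pmatrix}$; $\sharp$ inverse of $v\mapsto\omega_0(v,\cdot)$. $\mathcal S^k_\delta=\mathcal F\otimes B^\delta\otimes S^k$ ($S^k$ = $k$-th supersymmetric power, $B^\delta=\mathbb Ru$ even line) with $\mathrm L_X(f\otimes v)=X(f)\otimes v+(-1)^{\tilde X\tilde f}\sum_{i,j}fJ^j_i\otimes\rho(e^i_j)v$, $J^j_i=(-1)^{\tilde i\tilde X+1}\partial_{y^i}X^j$,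 $e^i_j(e_k)=\delta^i_ke_j$, $\rho(A)$ acting on $S^k$ by super-derivations induced by $A$ and on $u$ by $-\delta\,\mathrm{str}(A)$. $\mathcal F_\lambda$ = $\mathcal F$ with $\mathrm L^\lambda_Xf=X(f)+\lambda\,\mathrm{div}(X)f$, $\mathrm{div}(X)=\sum_i(-1)^{\tilde i\widetilde{X^i}}\partial_{y^i}X^i$; $\mathcal D_{\lambda,\mu}$ = differential operators $\mathcal F_\lambda\to\mathcal F_\mu$ with $\mathcal L_XD=\mathrm L^\mu_X\circ D-(-1)^{\tilde X\tilde D}D\circ\mathrm L^\lambda_X$; $Q_{\mathrm{Aff}}$ is the inverse of the total symbol map $\sum_\alpha f_\alpha\partial_{y^1}^{\alpha_1}\cdots\partial_{y^{p+q+2r}}^{\alpha_{p+q+2r}}\mapsto\sum_\alpha f_\alpha\otimes e_1^{\alpha_1}\vee\cdots\vee e_{p+q+2r}^{\alpha_{p+q+2r}}$. On symbols, $\mathrm{div}(S)=\sum_j(-1)^{\tilde j}\mathrm i(\varepsilon^j)\partial_{y^j}S$, with $\mathrm i(\varepsilon)(v_1\vee\cdots\vee v_k)=\sum_a(-1)^{\tilde\varepsilon\sum_{b<a}\tilde v_b}\langle\varepsilon,v_a\rangle v_1\vee\cdots\widehat{v_a}\cdots\vee v_k$. $\mathfrak{osp}(p+1,q+1|2r)=\mathfrak g_{-1}\oplus\mathfrak g_0\oplus\mathfrak g_1$ is realized by $X^h=-\sum_ih^i\partial_{y^i}$ ($h\in\mathfrak g_{-1}=\mathbb R^{p+q|2r}$),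 $X^h=-\sum_{i,j}(-1)^{\tilde j(\tilde i+\tilde j)}h^i_jy^j\partial_{y^i}$ ($h\in\mathfrak g_0=\mathfrak{osp}(p,q|2r)\oplus\mathbb R\mathrm{Id}$, $\mathfrak{osp}(p,q|2r)$ the matrices preserving $\omega_0$), $X^h=\sum_jh_jy^j(-1)^{\tilde j}\mathcal E+\frac12F_0(y)X^{h^\sharp}$ ($h\in\mathfrak g_1=(\mathbb R^{p+q|2r})^*$), $\mathcal E=\sum_iy^i\partial_{y^i}$, $F_0(y)=\sum_{i\le p}(y^i)^2-\sum_{i=p+1}^{p+q}(y^i)^2+2\sum_{i=p+q+1}^{p+q+r}y^iy^{i+r}$. *)

From Stdlib Require Import Reals List Arith Bool ClassicalEpsilon.
Open Scope R_scope.

(* Conventions.  Coordinates on R^{m|N} (m = p+q, N = 2r) are indexed  *)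
(* from 0: y^k for k < m are even, y^k for m <= k < m+N are odd; the   *)
(* paper's y^{k+1} is our y^k.  The odd coordinate y^{m+a} is written  *)
(* xi_a (a < N).                                                       *)
(* A superfunction f in C^oo(R^{m|N}) = C^oo(R^m) (x) Lambda[xi_0..]   *)
(* is given by its components f K : (nat -> R) -> R, K < 2^N a bitmask *)
(* encoding the monomial xi_{a1} ... xi_{ak} (a1 < ... < ak).          *)

Definition pt := nat -> R.
Definition SF := nat -> pt -> R.
Definition VF := nat -> SF.   (* X = sum_k X k * d/dy^k *)
Definition Op := SF -> SF.

Definition Rsum (n : nat) (F : nat -> R) : R :=
  fold_right Rplus 0 (map F (seq 0 n)).

Definition sgn (b : bool) : R := if b then -1 else 1.

Definition par (m k : nat) : bool := Nat.leb m k.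

Definition upd (x : pt) (i : nat) (s : R) : pt :=
  fun j => if Nat.eqb j i then s else x j.

Definition pd (i : nat) (g : pt -> R) (x : pt) : R :=
  epsilon (inhabits 0) (fun l => derivable_pt_lim (fun s => g (upd x i s)) (x i) l).

Definition iter_pd (L : list nat) (g : pt -> R) : pt -> R :=
  fold_right (fun i h => pd i h) g L.

Definition cont_at (m : nat) (g : pt -> R) (x : pt) : Prop :=
  forall eps, eps > 0 -> exists del, del > 0 /\
    forall y, (forall i, (i < m)%nat -> Rabs (y i - x i) < del) ->
      Rabs (g y - g x) < eps.

Definition Smooth (m : nat) (g : pt -> R) : Prop :=
  forall L : list nat, Forall (fun i => (i < m)%nat) L ->
    (forall x, cont_at m (iter_pd L g) x) /\
    (forall i x, (i < m)%nat -> exists l,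
        derivable_pt_lim (fun s => iter_pd L g (upd x i s)) (x i) l).

Definition OnRm (m : nat) (g : pt -> R) : Prop :=
  forall x y, (forall i, (i < m)%nat -> x i = y i) -> g x = g y.

Definition IsSF (m : nat) (f : SF) : Prop :=
  forall K, Smooth m (f K) /\ OnRm m (f K).

Definition popc (N K : nat) : nat :=
  length (filter (fun a => Nat.testbit K a) (seq 0 N)).

Definition cross (N I J : nat) : nat :=
  length (filter (fun ab => Nat.testbit I (fst ab) && Nat.testbit J (snd ab)
                            && Nat.ltb (snd ab) (fst ab))
                 (list_prod (seq 0 N) (seq 0 N))).

Definition sfadd (f g : SF) : SF := fun K x => f K x + g K x.
Definition sfscal (c : R) (f : SF) : SF := fun K x => c * f K x.
Definition sfsum (n : nat) (F : nat -> SF) : SF :=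
  fun K x => Rsum n (fun k => F k K x).
Definition sfconst (c : R) : SF := fun K _ => if Nat.eqb K 0 then c else 0.

(* supercommutative product xi_I xi_J = (-1)^{cross I J} xi_{I u J} *)
Definition sfmul (N : nat) (f g : SF) : SF := fun K x =>
  Rsum (Nat.pow 2 N) (fun I =>
    if Nat.eqb (Nat.land I K) I
    then (-1) ^ (cross N I (Nat.lxor K I)) * f I x * g (Nat.lxor K I) x
    else 0).

Definition alpha (N : nat) (f : SF) : SF := fun K x => (-1) ^ (popc N K) * f K x.
Definition alphaIf (N : nat) (b : bool) (f : SF) : SF := if b then alpha N f else f.
Definition evpart (N : nat) (f : SF) : SF :=
  fun K x => if Nat.even (popc N K) then f K x else 0.
Definition oddpart (N : nat) (f : SF) : SF :=
  fun K x => if Nat.even (popc N K) then 0 else f K x.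

(* left partial derivatives *)
Definition dEv (i : nat) (f : SF) : SF := fun K => pd i (f K).
Definition dOd (a : nat) (f : SF) : SF := fun K x =>
  if Nat.testbit K a then 0
  else (-1) ^ (popc a K) * f (Nat.lor K (Nat.pow 2 a)) x.
Definition dd (m k : nat) (f : SF) : SF :=
  if Nat.ltb k m then dEv k f else dOd (k - m) f.

Definition coord (m k : nat) : SF :=
  if Nat.ltb k m then (fun K x => if Nat.eqb K 0 then x k else 0)
  else (fun K _ => if Nat.eqb K (Nat.pow 2 (k - m)) then 1 else 0).

Section Ops.
Variables (m N : nat).
Let n := (m + N)%nat.

Definition vfapp (X : VF) (f : SF) : SF :=
  sfsum n (fun k => sfmul N (X k) (dd m k f)).

Definition evVF (X : VF) : VF := fun k =>
  if par m k then oddpart N (X k) else evpart N (X k).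
Definition odVF (X : VF) : VF := fun k =>
  if par m k then evpart N (X k) else oddpart N (X k).

(* div(X) = sum_i (-1)^{~i ~X^i} d_i X^i *)
Definition divX (X : VF) : SF :=
  sfsum n (fun i => dd m i (alphaIf N (par m i) (X i))).

Definition LieF (l : R) (X : VF) (f : SF) : SF :=
  sfadd (vfapp X f) (sfscal l (sfmul N (divX X) f)).

(* L_X D = L^mu_X o D - (-1)^{~X ~D} D o L^lambda_X, X homogeneous of
   parity xp; the sign is realized as alpha^xp o D o alpha^xp
   (= (-1)^{xp ~D} D for homogeneous D), i.e. extended linearly in D *)
Definition LDH (xp : bool) (l mu : R) (X : VF) (D : Op) : Op := fun g =>
  sfadd (LieF mu X (D g))
        (sfscal (-1) (alphaIf N xp (D (alphaIf N xp (LieF l X g))))).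
Definition LD (l mu : R) (X : VF) (D : Op) : Op := fun g =>
  sfadd (LDH false l mu (evVF X) D g) (LDH true l mu (odVF X) D g).

(* symbols of degree 1 in S^1_delta: S = sum_k S k (x) u (x) e_k *)
Definition Sym1 := nat -> SF.

Definition Jm (xp : bool) (X : VF) (j i : nat) : SF :=
  sfscal (- sgn (par m i && xp)) (dd m i (X j)).

(* L_X S, X homogeneous of parity xp, using rho(e^i_j)(u e_k)
   = -delta str(e^i_j) u e_k + delta_{ik} u e_j *)
Definition LsymH (xp : bool) (delta : R) (X : VF) (S : Sym1) : Sym1 := fun j =>
  sfadd (vfapp X (S j))
   (sfadd
     (sfscal (- delta) (sfsum n (fun i =>
         sfscal (sgn (par m i)) (sfmul N (alphaIf N xp (S j)) (Jm xp X i i)))))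
     (sfsum n (fun k => sfmul N (alphaIf N xp (S k)) (Jm xp X j k)))).
Definition Lsym (delta : R) (X : VF) (S : Sym1) : Sym1 := fun j =>
  sfadd (LsymH false delta (evVF X) S j) (LsymH true delta (odVF X) S j).

(* div(S) = sum_j (-1)^{~j} i(eps^j) d_j S  (Koszul sign when i(eps^j)
   passes the coefficient function) ; result in S^0_delta = F *)
Definition divS (S : Sym1) : SF :=
  sfsum n (fun j => sfscal (sgn (par m j)) (alphaIf N (par m j) (dd m j (S j)))).

(* Q_Aff on symbols of degree <= 1: S1 (degree 1) + S0 (degree 0) *)
Definition QAff (S1 : Sym1) (S0 : SF) : Op := fun g =>
  sfadd (sfsum n (fun k => sfmul N (S1 k) (dd m k g))) (sfmul N S0 g).

Definition Qt (t : R) (S : Sym1) : Op := QAff S (sfscal t (divS S)).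

End Ops.

Section Osp.
Variables (p q r : nat).
Let m := (p + q)%nat.
Let N := (2 * r)%nat.
Let n := (m + N)%nat.

(* G_0 = diag(Id_p, -Id_q, J) *)
Definition G0 (k l : nat) : R :=
  if Nat.ltb k m then
    (if Nat.eqb k l then (if Nat.ltb k p then 1 else -1) else 0)
  else if Nat.ltb l m then 0
  else if Nat.ltb (k - m) r then (if Nat.eqb (l - m) (k - m + r) then 1 else 0)
  else (if Nat.eqb (l - m + r) (k - m) then -1 else 0).

(* inverse of G_0 : diag(Id_p, -Id_q, -J) *)
Definition G0inv (k l : nat) : R :=
  if Nat.ltb k m then G0 k l else - G0 k l.

(* homogeneous h of parity s preserves omega_0:
   omega_0(h e_k, e_l) + (-1)^{s ~k} omega_0(e_k, h e_l) = 0,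
   omega_0(U,V) = V^t G_0 U, h e_k = sum_b h b k e_b *)
Definition osp_cond (s : bool) (h : nat -> nat -> R) : Prop :=
  forall k l, (k < n)%nat -> (l < n)%nat ->
    Rsum n (fun b => G0 l b * h b k)
    + sgn (s && par m k) * Rsum n (fun a => h a l * G0 a k) = 0.

Definition matEv (h : nat -> nat -> R) : nat -> nat -> R := fun i j =>
  if Bool.eqb (par m i) (par m j) then h i j else 0.
Definition matOd (h : nat -> nat -> R) : nat -> nat -> R := fun i j =>
  if Bool.eqb (par m i) (par m j) then 0 else h i j.

Definition in_osp (h : nat -> nat -> R) : Prop :=
  osp_cond false (matEv h) /\ osp_cond true (matOd h).

Definition in_g0 (h : nat -> nat -> R) : Prop :=
  exists c : R, in_osp (fun i j => h i j - (if Nat.eqb i j then c else 0)).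

Definition F0 : SF :=
  sfadd (sfsum p (fun i => sfmul N (coord m i) (coord m i)))
  (sfadd (sfscal (-1) (sfsum q (fun i => sfmul N (coord m (p + i)) (coord m (p + i)))))
         (sfscal 2 (sfsum r (fun a => sfmul N (coord m (m + a)) (coord m (m + a + r)))))).

(* h in g_{-1}: X^h = - sum_i h^i d_i *)
Definition Xm1 (v : nat -> R) : VF := fun k => sfconst (- v k).

(* h in g_0: X^h = - sum_{i,j} (-1)^{~j(~i+~j)} h^i_j y^j d_i *)
Definition X0 (h : nat -> nat -> R) : VF := fun i =>
  sfsum n (fun j => sfscal (- sgn (par m j && xorb (par m i) (par m j)) * h i j)
                           (coord m j)).

(* h in g_1 = (R^{p+q|2r})^* :
   X^h = sum_j h_j y^j (-1)^{~j} E + 1/2 F_0(y) X^{h#} *)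
Definition sharp (w : nat -> R) : nat -> R := fun k => Rsum n (fun l => G0inv k l * w l).
Definition X1 (w : nat -> R) : VF := fun k =>
  sfadd (sfmul N (sfsum n (fun j => sfscal (w j * sgn (par m j)) (coord m j))) (coord m k))
        (sfscal (/ 2) (sfmul N F0 (Xm1 (sharp w) k))).

(* general h = (v, A, w) in g_{-1} (+) g_0 (+) g_1 *)
Definition Xh (v : nat -> R) (A : nat -> nat -> R) (w : nat -> R) : VF := fun k =>
  sfadd (Xm1 v k) (sfadd (X0 A k) (X1 w k)).

End Osp.

From Stdlib Require Import Reals List Arith Bool Lia Lra ClassicalEpsilon FunctionalExtensionality Setoid Morphisms.
From Coquelicot Require Coquelicot.
Open Scope R_scope.

Lemma Rsum_0 F : Rsum 0 F = 0.
Proof. reflexivity. Qed.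

Lemma fold_plus_app (l1 l2 : list R) :
  fold_right Rplus 0 (l1 ++ l2) = fold_right Rplus 0 l1 + fold_right Rplus 0 l2.
Proof. induction l1; simpl; [lra|rewrite IHl1; lra]. Qed.

Lemma Rsum_S n F : Rsum (S n) F = Rsum n F + F n.
Proof. unfold Rsum. rewrite seq_S, map_app, fold_plus_app. simpl. lra. Qed.

Lemma Rsum_ext n F G : (forall k, (k < n)%nat -> F k = G k) -> Rsum n F = Rsum n G.
Proof.
  induction n; intros H; [reflexivity|]. rewrite !Rsum_S, IHn, H; auto; intros; apply H; lia.
Qed.

Lemma Rsum_plus n F G : Rsum n (fun k => F k + G k) = Rsum n F + Rsum n G.
Proof. induction n; [rewrite !Rsum_0; lra|]. rewrite !Rsum_S, IHn. lra. Qed.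

Lemma Rsum_scal n c F : Rsum n (fun k => c * F k) = c * Rsum n F.
Proof. induction n; [rewrite !Rsum_0; lra|]. rewrite !Rsum_S, IHn. lra. Qed.

Lemma Rsum_zero n F : (forall k, (k < n)%nat -> F k = 0) -> Rsum n F = 0.
Proof. intros H. rewrite (Rsum_ext n F (fun _ => 0)); auto. induction n; [reflexivity|].
  rewrite Rsum_S, IHn; [lra|]; auto. Qed.

Lemma Rsum_add_len a b F : Rsum (a + b) F = Rsum a F + Rsum b (fun k => F (a + k)%nat).
Proof. induction b.
  - rewrite Nat.add_0_r, Rsum_0. lra.
  - rewrite Nat.add_succ_r, !Rsum_S, IHb. lra. Qed.

Lemma Rsum_swap n m F :
  Rsum n (fun i => Rsum m (fun j => F i j)) = Rsum m (fun j => Rsum n (fun i => F i j)).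
Proof. induction n.
  - rewrite Rsum_0. symmetry. apply Rsum_zero. reflexivity.
  - rewrite Rsum_S, IHn, <- Rsum_plus. apply Rsum_ext. intros. rewrite Rsum_S. reflexivity. Qed.

Lemma Rsum_delta n j F : (j < n)%nat ->
  Rsum n (fun k => if Nat.eqb k j then F k else 0) = F j.
Proof. induction n; intros H; [lia|]. rewrite Rsum_S.
  destruct (Nat.eq_dec j n) as [->|Hn].
  - rewrite Nat.eqb_refl, Rsum_zero; [lra|]. intros k Hk. destruct (Nat.eqb_spec k n); [lia|reflexivity].
  - rewrite IHn by lia. destruct (Nat.eqb_spec n j); [lia|lra]. Qed.

Lemma Rsum_delta' n j F : (j < n)%nat ->
  Rsum n (fun k => if Nat.eqb j k then F k else 0) = F j.
Proof. intros H. rewrite <- (Rsum_delta n j F H). apply Rsum_ext. intros k _.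
  rewrite Nat.eqb_sym. reflexivity. Qed.

Lemma Rsum_const n c : Rsum n (fun _ => c) = INR n * c.
Proof. induction n; [rewrite Rsum_0; simpl; ring|]. rewrite Rsum_S, IHn, S_INR. ring. Qed.

(* Bitmasks.  A Grassmann index K < 2^(N+1) is either K < 2^N or K + 2^N
   with K < 2^N (the monomial contains the last generator xi_N). *)

Lemma lt_pow2_bits N a : (a < 2 ^ N)%nat -> forall b, (N <= b)%nat -> Nat.testbit a b = false.
Proof. intros H b Hb. rewrite <- (Nat.mod_small a (2^N)) by exact H.
  apply Nat.mod_pow2_bits_high; auto. Qed.

Lemma bits_lt_pow2 N a : (forall b, (N <= b)%nat -> Nat.testbit a b = false) -> (a < 2 ^ N)%nat.
Proof. intros H. assert (a = a mod 2 ^ N) as ->.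
  { apply Nat.bits_inj. intro b. destruct (Nat.lt_ge_cases b N).
    - rewrite Nat.mod_pow2_bits_low; auto.
    - rewrite Nat.mod_pow2_bits_high, H; auto. }
  apply Nat.mod_upper_bound. apply Nat.pow_nonzero. lia. Qed.

Lemma addtop_bits N a b : (a < 2 ^ N)%nat ->
  Nat.testbit (a + 2 ^ N) b = orb (Nat.eqb N b) (Nat.testbit a b).
Proof. intros H. rewrite Nat.add_nocarry_lxor.
  - rewrite Nat.lxor_spec, Nat.pow2_bits_eqb. destruct (Nat.eqb_spec N b).
    + subst. rewrite lt_pow2_bits with (N:=b); auto.
    + destruct (Nat.testbit a b); reflexivity.
  - apply Nat.bits_inj. intro c. rewrite Nat.land_spec, Nat.pow2_bits_eqb, Nat.bits_0.
    destruct (Nat.eqb_spec N c).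
    + subst. rewrite lt_pow2_bits with (N:=c); auto.
    + apply andb_false_r. Qed.

Lemma addtop_lt N a : (a < 2 ^ N)%nat -> (a + 2 ^ N < 2 ^ S N)%nat.
Proof. intros. rewrite Nat.pow_succ_r'. lia. Qed.

Lemma pow2S N : (2 ^ S N = 2 ^ N + 2 ^ N)%nat.
Proof. rewrite Nat.pow_succ_r'. lia. Qed.

Lemma testbit_top_lo N K a : (K < 2^N)%nat -> (a < N)%nat -> Nat.testbit (K + 2^N) a = Nat.testbit K a.
Proof. intros. rewrite addtop_bits by auto. destruct (Nat.eqb_spec N a); [lia|reflexivity]. Qed.

Lemma lt_pow2_lxor N a b : (a < 2^N)%nat -> (b < 2^N)%nat -> (Nat.lxor a b < 2^N)%nat.
Proof. intros. apply bits_lt_pow2. intros c Hc. rewrite Nat.lxor_spec, !(lt_pow2_bits N) by auto.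
  reflexivity. Qed.
Lemma lt_pow2_land N a b : (a < 2^N)%nat -> (Nat.land a b < 2^N)%nat.
Proof. intros. apply bits_lt_pow2. intros c Hc. rewrite Nat.land_spec, !(lt_pow2_bits N) by auto.
  reflexivity. Qed.
Lemma lt_pow2_lor N a b : (a < 2^N)%nat -> (b < 2^N)%nat -> (Nat.lor a b < 2^N)%nat.
Proof. intros. apply bits_lt_pow2. intros c Hc. rewrite Nat.lor_spec, !(lt_pow2_bits N) by auto.
  reflexivity. Qed.
Lemma pow2_lt a N : (a < N)%nat -> (2 ^ a < 2 ^ N)%nat.
Proof. intros. apply Nat.pow_lt_mono_r; lia. Qed.

Ltac bitsolve := apply Nat.bits_inj; intro;
  repeat (rewrite ?Nat.land_spec, ?Nat.lxor_spec, ?Nat.lor_spec, ?Nat.pow2_bits_eqb).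

Section TopBit.
Variables (N I K : nat) (HI : (I < 2^N)%nat) (HK : (K < 2^N)%nat).

Lemma land_addtop_r : Nat.land I (K + 2^N) = Nat.land I K.
Proof. bitsolve. rewrite addtop_bits by auto. destruct (Nat.eqb_spec N n).
  - subst. rewrite (lt_pow2_bits n I) by auto. reflexivity.
  - reflexivity. Qed.
Lemma lxor_addtop_l : Nat.lxor (K + 2^N) I = (Nat.lxor K I + 2^N)%nat.
Proof. bitsolve. rewrite !addtop_bits by (auto using lt_pow2_lxor). rewrite Nat.lxor_spec.
  destruct (Nat.eqb_spec N n).
  - subst. rewrite (lt_pow2_bits n I) by auto. reflexivity.
  - reflexivity. Qed.
Lemma land_addtop : Nat.land (I + 2^N) (K + 2^N) = (Nat.land I K + 2^N)%nat.
Proof. bitsolve. rewrite !addtop_bits by (auto using lt_pow2_land). rewrite Nat.land_spec.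
  destruct (Nat.eqb N n); reflexivity. Qed.
Lemma lxor_addtop : Nat.lxor (K + 2^N) (I + 2^N) = Nat.lxor K I.
Proof. bitsolve. rewrite !addtop_bits by auto.
  destruct (Nat.eqb_spec N n).
  - subst. rewrite (lt_pow2_bits n I), (lt_pow2_bits n K) by auto. reflexivity.
  - reflexivity. Qed.
Lemma land_addtop_l_neq : Nat.eqb (Nat.land (I + 2^N) K) (I + 2^N) = false.
Proof. apply Nat.eqb_neq. intro H.
  assert (Nat.testbit (Nat.land (I + 2^N) K) N = Nat.testbit (I + 2^N) N) as E by (rewrite H; reflexivity).
  rewrite Nat.land_spec, (lt_pow2_bits N K), addtop_bits in E by (auto; lia).
  rewrite Nat.eqb_refl in E. discriminate. Qed.
Lemma eqb_land_addtop : Nat.eqb (Nat.land I K + 2^N) (I + 2^N) = Nat.eqb (Nat.land I K) I.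
Proof. destruct (Nat.eqb_spec (Nat.land I K) I); [apply Nat.eqb_eq|apply Nat.eqb_neq]; lia. Qed.

End TopBit.

Lemma popc_S N K : popc (S N) K = (popc N K + if Nat.testbit K N then 1 else 0)%nat.
Proof. unfold popc. rewrite seq_S, filter_app, length_app. simpl.
  destruct (Nat.testbit K N); reflexivity. Qed.

Lemma popc_ext N K K' : (forall a, (a < N)%nat -> Nat.testbit K a = Nat.testbit K' a) ->
  popc N K = popc N K'.
Proof. intros H. unfold popc. f_equal. apply filter_ext_in. intros a Ha.
  apply in_seq in Ha. apply H. lia. Qed.

Lemma popc_0 N : popc N 0 = 0%nat.
Proof. unfold popc. induction (seq 0 N); simpl; auto. rewrite Nat.bits_0. auto. Qed.

Lemma popc_top N K : (K < 2^N)%nat -> popc N (K + 2^N) = popc N K.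
Proof. intros. apply popc_ext. intros. apply testbit_top_lo; auto. Qed.
Lemma popc_hi N K : (K < 2^N)%nat -> popc (S N) (K + 2^N) = S (popc N K).
Proof. intros. rewrite popc_S, popc_top, addtop_bits, Nat.eqb_refl by auto. simpl. lia. Qed.
Lemma popc_lo N K : (K < 2^N)%nat -> popc (S N) K = popc N K.
Proof. intros. rewrite popc_S, (lt_pow2_bits N K) by auto. lia. Qed.

Lemma popc_lor c K a : Nat.testbit K a = false ->
  popc c (Nat.lor K (2 ^ a)) = (popc c K + if Nat.ltb a c then 1 else 0)%nat.
Proof. intros H. induction c.
  - reflexivity.
  - rewrite !popc_S, IHc, Nat.lor_spec, Nat.pow2_bits_eqb.
    destruct (Nat.eqb_spec a c).
    + subst. rewrite H, Nat.ltb_irrefl.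
      assert (Nat.ltb c (S c) = true) as -> by (apply Nat.ltb_lt; lia). simpl. lia.
    + rewrite orb_false_r. destruct (Nat.ltb_spec a c), (Nat.ltb_spec a (S c)); try lia. Qed.

Lemma popc_pow2 N a : (a < N)%nat -> popc N (2 ^ a) = 1%nat.
Proof. intros. replace (2^a)%nat with (Nat.lor 0 (2^a)) by apply Nat.lor_0_l.
  rewrite popc_lor by apply Nat.bits_0. rewrite popc_0. apply Nat.ltb_lt in H. rewrite H. reflexivity. Qed.

Lemma testbit_lor_ne K a b : a <> b -> Nat.testbit (Nat.lor K (2^a)) b = Nat.testbit K b.
Proof. intros. rewrite Nat.lor_spec, Nat.pow2_bits_false by auto. apply orb_false_r. Qed.

Lemma lor_pow2_eq K a b : Nat.testbit K a = false ->
  Nat.eqb (Nat.lor K (2^a)) (2^b) = andb (Nat.eqb a b) (Nat.eqb K 0).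
Proof. intros H. destruct (Nat.eqb_spec a b).
  - subst. destruct (Nat.eqb_spec K 0).
    + subst. simpl. apply Nat.eqb_eq. apply Nat.lor_0_l.
    + simpl. apply Nat.eqb_neq. intro E. apply n. apply Nat.bits_inj. intro c.
      assert (Nat.testbit (Nat.lor K (2^b)) c = Nat.testbit (2^b) c) as Ec by (rewrite E; auto).
      rewrite Nat.lor_spec, Nat.pow2_bits_eqb in Ec. rewrite Nat.bits_0.
      destruct (Nat.eqb_spec b c); [subst; auto|]. destruct (Nat.testbit K c); auto.
  - simpl. apply Nat.eqb_neq. intro E.
    assert (Nat.testbit (Nat.lor K (2^a)) a = Nat.testbit (2^b) a) as Ea by (rewrite E; auto).
    rewrite Nat.lor_spec, Nat.pow2_bits_true, orb_true_r, Nat.pow2_bits_false in Ea by auto.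
    discriminate. Qed.

Definition nsum (l : list nat) : nat := fold_right plus 0%nat l.

Lemma nsum_app l1 l2 : nsum (l1 ++ l2) = (nsum l1 + nsum l2)%nat.
Proof. induction l1; simpl; auto. rewrite IHl1; lia. Qed.

Lemma length_filter_prod {A B} (P : A * B -> bool) l1 l2 :
  length (filter P (list_prod l1 l2)) =
  nsum (map (fun a => length (filter (fun b => P (a, b)) l2)) l1).
Proof. induction l1; simpl; [reflexivity|].
  rewrite filter_app, length_app, IHl1. f_equal.
  clear. induction l2; simpl; [reflexivity|]. destruct (P (a, a0)); simpl; auto. Qed.

Definition crossF (N I J : nat) : nat :=
  nsum (map (fun a => length (filter (fun b => Nat.testbit I a && Nat.testbit J b && Nat.ltb b a)
    (seq 0 N))) (seq 0 N)).

Lemma cross_F N I J : cross N I J = crossF N I J.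
Proof. unfold cross, crossF. rewrite length_filter_prod. reflexivity. Qed.

Lemma cross_S N I J :
  cross (S N) I J = (cross N I J + if Nat.testbit I N then popc N J else 0)%nat.
Proof. rewrite !cross_F. unfold crossF. rewrite seq_S, map_app, nsum_app. simpl.
  f_equal.
  - f_equal. apply map_ext_in. intros a Ha. apply in_seq in Ha.
    rewrite filter_app, length_app. simpl.
    assert (Nat.ltb N a = false) as -> by (apply Nat.ltb_ge; lia).
    rewrite !andb_false_r. simpl. lia.
  - rewrite filter_app, length_app. simpl. rewrite Nat.ltb_irrefl, !andb_false_r. simpl.
    unfold popc. destruct (Nat.testbit I N); simpl.
    + rewrite !Nat.add_0_r. f_equal. apply filter_ext_in. intros b Hb. apply in_seq in Hb.
      assert (Nat.ltb b N = true) as -> by (apply Nat.ltb_lt; lia). apply andb_true_r.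
    + rewrite !Nat.add_0_r. clear. induction (seq 0 N); simpl; auto. Qed.

Lemma cross_ext N I J I' J' :
  (forall a, (a < N)%nat -> Nat.testbit I a = Nat.testbit I' a) ->
  (forall a, (a < N)%nat -> Nat.testbit J a = Nat.testbit J' a) ->
  cross N I J = cross N I' J'.
Proof. intros H1 H2. rewrite !cross_F. unfold crossF. f_equal. apply map_ext_in.
  intros a Ha. apply in_seq in Ha. f_equal. apply filter_ext_in. intros b Hb. apply in_seq in Hb.
  rewrite H1, H2 by lia. reflexivity. Qed.

Lemma cross_lo N I J : (I < 2^N)%nat -> cross (S N) I J = cross N I J.
Proof. intros. rewrite cross_S, (lt_pow2_bits N I) by auto. lia. Qed.
Lemma cross_top_r N I J : (J < 2^N)%nat -> cross N I (J + 2^N) = cross N I J.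
Proof. intros. apply cross_ext; auto. intros. apply testbit_top_lo; auto. Qed.
Lemma cross_top_l N I J : (I < 2^N)%nat -> cross N (I + 2^N) J = cross N I J.
Proof. intros. apply cross_ext; auto. intros. apply testbit_top_lo; auto. Qed.
Lemma cross_hi N I J : (I < 2^N)%nat -> cross (S N) (I + 2^N) J = (cross N I J + popc N J)%nat.
Proof. intros. rewrite cross_S, cross_top_l, addtop_bits, Nat.eqb_refl by auto. reflexivity. Qed.

(* The Grassmann algebra.  eqN N f g: f and g agree on all components
   K < 2^N (the only ones that matter for N generators); shift N f is the
   coefficient of xi_N, i.e. the components K + 2^N. *)

Definition eqN (N : nat) (f g : SF) : Prop := forall K x, (K < 2 ^ N)%nat -> f K x = g K x.
Definition shift (N : nat) (f : SF) : SF := fun K x => f (K + 2 ^ N)%nat x.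
Definition zero : SF := fun _ _ => 0.

Ltac ext2 := apply functional_extensionality; intro; apply functional_extensionality; intro.

Lemma eqN_S N f g : eqN (S N) f g <-> eqN N f g /\ eqN N (shift N f) (shift N g).
Proof. split.
  - intros H. split; intros K x HK; unfold shift; apply H.
    + rewrite Nat.pow_succ_r'. lia.
    + apply addtop_lt; auto.
  - intros [H1 H2] K x HK. rewrite Nat.pow_succ_r' in HK. destruct (Nat.lt_ge_cases K (2^N)).
    + apply H1; auto.
    + replace K with (K - 2^N + 2^N)%nat by lia. apply H2. lia. Qed.

Lemma eqN_0 f g : (forall x, f 0%nat x = g 0%nat x) -> eqN 0 f g.
Proof. intros H K x HK. simpl in HK. replace K with 0%nat by lia. auto. Qed.

Instance eqN_equiv N : Equivalence (eqN N).
Proof. split.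
  - intros f K x _. reflexivity.
  - intros f g H K x HK. symmetry. auto.
  - intros f g h H1 H2 K x HK. rewrite H1, H2; auto. Qed.

Lemma eq_eqN N f g : f = g -> eqN N f g.
Proof. intros ->. reflexivity. Qed.

Instance sfadd_proper N : Proper (eqN N ==> eqN N ==> eqN N) sfadd.
Proof. repeat intro. unfold sfadd. rewrite H, H0; auto. Qed.
Instance sfscal_proper N c : Proper (eqN N ==> eqN N) (sfscal c).
Proof. repeat intro. unfold sfscal. rewrite H; auto. Qed.
Instance alpha_proper N : Proper (eqN N ==> eqN N) (alpha N).
Proof. repeat intro. unfold alpha. rewrite H; auto. Qed.
Instance sfmul_proper N : Proper (eqN N ==> eqN N ==> eqN N) (sfmul N).
Proof. intros f f' Hf g g' Hg K x HK. unfold sfmul. apply Rsum_ext. intros I HI.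
  destruct (Nat.eqb _ _); [|reflexivity]. rewrite Hf, Hg; auto using lt_pow2_lxor. Qed.
Instance shift_proper N : Proper (eqN (S N) ==> eqN N) (shift N).
Proof. intros f g H. apply eqN_S in H. tauto. Qed.

Lemma dOd_eqN N a f g : (a < N)%nat -> eqN N f g -> eqN N (dOd a f) (dOd a g).
Proof. intros Ha H K x HK. unfold dOd. destruct (Nat.testbit K a); [reflexivity|].
  rewrite H; auto using lt_pow2_lor, pow2_lt. Qed.

Lemma mul_add_l N f g h : sfmul N (sfadd f g) h = sfadd (sfmul N f h) (sfmul N g h).
Proof. ext2. unfold sfmul, sfadd. rewrite <- Rsum_plus. apply Rsum_ext. intros.
  destruct (Nat.eqb _ _); ring. Qed.
Lemma mul_add_r N f g h : sfmul N h (sfadd f g) = sfadd (sfmul N h f) (sfmul N h g).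
Proof. ext2. unfold sfmul, sfadd. rewrite <- Rsum_plus. apply Rsum_ext. intros.
  destruct (Nat.eqb _ _); ring. Qed.
Lemma mul_scal_l N c f g : sfmul N (sfscal c f) g = sfscal c (sfmul N f g).
Proof. ext2. unfold sfmul, sfscal. rewrite <- Rsum_scal. apply Rsum_ext. intros.
  destruct (Nat.eqb _ _); ring. Qed.
Lemma mul_scal_r N c f g : sfmul N f (sfscal c g) = sfscal c (sfmul N f g).
Proof. ext2. unfold sfmul, sfscal. rewrite <- Rsum_scal. apply Rsum_ext. intros.
  destruct (Nat.eqb _ _); ring. Qed.
Lemma mul_zero_l N f : sfmul N zero f = zero.
Proof. ext2. unfold sfmul, zero. apply Rsum_zero. intros. destruct (Nat.eqb _ _); ring. Qed.
Lemma mul_zero_r N f : sfmul N f zero = zero.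
Proof. ext2. unfold sfmul, zero. apply Rsum_zero. intros. destruct (Nat.eqb _ _); ring. Qed.
Lemma alpha_add N f g : alpha N (sfadd f g) = sfadd (alpha N f) (alpha N g).
Proof. ext2. unfold alpha, sfadd. ring. Qed.
Lemma alpha_scal N c f : alpha N (sfscal c f) = sfscal c (alpha N f).
Proof. ext2. unfold alpha, sfscal. ring. Qed.
Lemma alpha_alpha N f : alpha N (alpha N f) = f.
Proof. ext2. unfold alpha. rewrite <- Rmult_assoc, <- pow_add.
  replace (popc N x + popc N x)%nat with (2 * popc N x)%nat by lia. rewrite pow_1_even. ring. Qed.
Lemma alpha_zero N : alpha N zero = zero.
Proof. ext2. unfold alpha, zero. ring. Qed.
Lemma shift_add N f g : shift N (sfadd f g) = sfadd (shift N f) (shift N g).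
Proof. reflexivity. Qed.
Lemma shift_scal N c f : shift N (sfscal c f) = sfscal c (shift N f).
Proof. reflexivity. Qed.
Lemma scal_scal a b f : sfscal a (sfscal b f) = sfscal (a * b) f.
Proof. ext2. unfold sfscal. ring. Qed.
Lemma scal_1 f : sfscal 1 f = f.
Proof. ext2. unfold sfscal. ring. Qed.
Lemma scal_0 f : sfscal 0 f = zero.
Proof. ext2. unfold sfscal, zero. ring. Qed.
Lemma add_zero_l f : sfadd zero f = f.
Proof. ext2. unfold sfadd, zero. ring. Qed.
Lemma add_zero_r f : sfadd f zero = f.
Proof. ext2. unfold sfadd, zero. ring. Qed.
Lemma add_comm f g : sfadd f g = sfadd g f.
Proof. ext2. unfold sfadd. ring. Qed.
Lemma add_assoc f g h : sfadd (sfadd f g) h = sfadd f (sfadd g h).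
Proof. ext2. unfold sfadd. ring. Qed.
Lemma scal_add c f g : sfscal c (sfadd f g) = sfadd (sfscal c f) (sfscal c g).
Proof. ext2. unfold sfscal, sfadd. ring. Qed.
Lemma scal_zero c : sfscal c zero = zero.
Proof. ext2. unfold sfscal, zero. ring. Qed.
Lemma add_opp f : sfadd f (sfscal (-1) f) = zero.
Proof. ext2. unfold sfadd, sfscal, zero. ring. Qed.
Lemma dOd_add a f g : dOd a (sfadd f g) = sfadd (dOd a f) (dOd a g).
Proof. ext2. unfold dOd, sfadd. destruct (Nat.testbit _ _); ring. Qed.
Lemma dOd_scal a c f : dOd a (sfscal c f) = sfscal c (dOd a f).
Proof. ext2. unfold dOd, sfscal. destruct (Nat.testbit _ _); ring. Qed.
Lemma dOd_zero a : dOd a zero = zero.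
Proof. ext2. unfold dOd, zero. destruct (Nat.testbit _ _); ring. Qed.

(* Splitting off the generator xi_N: writing f = f0 + xi_N f1, the product is
   (f0 + xi_N f1)(g0 + xi_N g1) = f0 g0 + xi_N (f0 g1 + f1 alpha(g0)),
   alpha flips the sign of the xi_N part, and the odd derivatives act
   componentwise.  These are the induction steps of all the algebra laws. *)

Lemma mulS_lo N f g : eqN N (sfmul (S N) f g) (sfmul N f g).
Proof. intros K x HK. unfold sfmul. rewrite pow2S, Rsum_add_len.
  match goal with |- _ + Rsum _ ?F = _ => rewrite (Rsum_zero _ F), Rplus_0_r end.
  - apply Rsum_ext. intros I HI. destruct (Nat.eqb (Nat.land I K) I); [|reflexivity].
    rewrite cross_lo; auto.
  - intros k Hk. rewrite (Nat.add_comm (2^N) k), land_addtop_l_neq; auto. Qed.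

Lemma mulS_hi N f g : eqN N (shift N (sfmul (S N) f g))
  (sfadd (sfmul N f (shift N g)) (sfmul N (shift N f) (alpha N g))).
Proof. intros K x HK. unfold shift at 1, sfadd. unfold sfmul. rewrite pow2S, Rsum_add_len. f_equal.
  - apply Rsum_ext. intros I HI. rewrite land_addtop_r by auto.
    destruct (Nat.eqb (Nat.land I K) I); [|reflexivity].
    rewrite cross_lo, lxor_addtop_l, cross_top_r by (auto using lt_pow2_lxor). reflexivity.
  - apply Rsum_ext. intros I HI. rewrite (Nat.add_comm (2^N) I), land_addtop, eqb_land_addtop by auto.
    destruct (Nat.eqb (Nat.land I K) I); [|reflexivity].
    rewrite lxor_addtop, cross_hi by auto. unfold shift, alpha. rewrite pow_add. ring. Qed.

Lemma alphaS_lo N f : eqN N (alpha (S N) f) (alpha N f).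
Proof. intros K x HK. unfold alpha. rewrite popc_lo; auto. Qed.
Lemma alphaS_hi N f : eqN N (shift N (alpha (S N) f)) (sfscal (-1) (alpha N (shift N f))).
Proof. intros K x HK. unfold alpha, shift, sfscal. rewrite popc_hi by auto. simpl. ring. Qed.

Lemma dOd_shift N a f : (a < N)%nat -> eqN N (shift N (dOd a f)) (dOd a (shift N f)).
Proof. intros Ha K x HK. unfold dOd, shift. rewrite testbit_top_lo by auto.
  destruct (Nat.testbit K a); [reflexivity|].
  assert (popc a (K + 2^N) = popc a K) as ->.
  { apply popc_ext. intros. apply testbit_top_lo; auto; lia. }
  f_equal. f_equal. apply Nat.bits_inj. intro c.
  rewrite Nat.lor_spec, !addtop_bits, Nat.lor_spec by (auto using lt_pow2_lor, pow2_lt).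
  destruct (Nat.eqb N c), (Nat.testbit K c), (Nat.testbit (2^a) c); reflexivity. Qed.

Lemma dOdtop_lo N f : eqN N (dOd N f) (alpha N (shift N f)).
Proof. intros K x HK. unfold dOd, alpha, shift. rewrite (lt_pow2_bits N K) by auto.
  f_equal. f_equal. apply Nat.bits_inj. intro c.
  rewrite Nat.lor_spec, addtop_bits, Nat.pow2_bits_eqb by auto. apply orb_comm. Qed.
Lemma dOdtop_hi N f : eqN N (shift N (dOd N f)) zero.
Proof. intros K x HK. unfold shift, dOd, zero. rewrite addtop_bits, Nat.eqb_refl by auto. reflexivity. Qed.

Lemma shift_const N c : shift N (sfconst c) = zero.
Proof. ext2. unfold shift, zero, sfconst. destruct (Nat.eqb_spec (x + 2^N) 0); [|reflexivity].
  pose proof (Nat.pow_nonzero 2 N). lia. Qed.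

Lemma mul0 f g : sfmul 0 f g 0%nat = fun x => f 0%nat x * g 0%nat x.
Proof. apply functional_extensionality. intro x. unfold sfmul. simpl. rewrite Rsum_S, Rsum_0.
  simpl. change (Nat.lxor 0 0) with 0%nat. ring. Qed.
Lemma alpha0 f x : alpha 0 f 0%nat x = f 0%nat x.
Proof. unfold alpha. simpl. ring. Qed.

Lemma alpha_mul N f g : eqN N (alpha N (sfmul N f g)) (sfmul N (alpha N f) (alpha N g)).
Proof. revert f g. induction N; intros f g.
  - apply eqN_0. intro x. rewrite alpha0, !mul0, !alpha0. reflexivity.
  - apply eqN_S. split.
    + rewrite !alphaS_lo, !mulS_lo, !alphaS_lo. apply IHN.
    + rewrite alphaS_hi, mulS_hi, mulS_hi, !alphaS_hi, alpha_add, !IHN.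
      rewrite !alphaS_lo, alpha_alpha, mul_scal_l, mul_scal_r. rewrite scal_add. reflexivity. Qed.

Lemma alpha_const N c : alpha N (sfconst c) = sfconst c.
Proof. ext2. unfold alpha, sfconst. destruct (Nat.eqb_spec x 0); [subst; rewrite popc_0|]; simpl; ring. Qed.

Lemma mul_one_l N f : eqN N (sfmul N (sfconst 1) f) f.
Proof. revert f; induction N; intro f.
  - apply eqN_0. intro. rewrite mul0. unfold sfconst. simpl. ring.
  - apply eqN_S. split.
    + rewrite mulS_lo. apply IHN.
    + rewrite mulS_hi, shift_const, mul_zero_l, add_zero_r. apply IHN. Qed.
Lemma mul_one_r N f : eqN N (sfmul N f (sfconst 1)) f.
Proof. revert f; induction N; intro f.
  - apply eqN_0. intro. rewrite mul0. unfold sfconst. simpl. ring.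
  - apply eqN_S. split.
    + rewrite mulS_lo. apply IHN.
    + rewrite mulS_hi, shift_const, mul_zero_r, add_zero_l, alpha_const. apply IHN. Qed.

Lemma mul_assoc N f g h : eqN N (sfmul N (sfmul N f g) h) (sfmul N f (sfmul N g h)).
Proof. revert f g h; induction N; intros f g h.
  - apply eqN_0. intro. rewrite !mul0. ring.
  - apply eqN_S. split.
    + rewrite !mulS_lo. apply IHN.
    + rewrite mulS_hi, mulS_hi, mulS_hi, mulS_hi, !mulS_lo, alpha_mul.
      rewrite mul_add_l, mul_add_r, !IHN. rewrite add_assoc. reflexivity. Qed.

Definition HomogN (N : nat) (b : bool) (g : SF) : Prop := eqN N (alpha N g) (sfscal (sgn b) g).

Lemma hom_lo N b g : HomogN (S N) b g -> HomogN N b g.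
Proof. unfold HomogN. intros H. apply eqN_S in H. destruct H as [H _]. rewrite <- alphaS_lo. exact H. Qed.
Lemma hom_hi N b g : HomogN (S N) b g -> HomogN N (negb b) (shift N g).
Proof. unfold HomogN. intros H. apply eqN_S in H. destruct H as [_ H].
  rewrite alphaS_hi, shift_scal in H. intros K x HK. specialize (H K x HK). unfold sfscal in *.
  destruct b; simpl in *; lra. Qed.

Lemma alphaIf_lo N b f : eqN N (alphaIf (S N) b f) (alphaIf N b f).
Proof. destruct b; simpl; [apply alphaS_lo|reflexivity]. Qed.
Lemma alphaIf_hi N b f : eqN N (shift N (alphaIf (S N) b f)) (sfscal (sgn b) (alphaIf N b (shift N f))).
Proof. destruct b; simpl; [apply alphaS_hi|rewrite scal_1; reflexivity]. Qed.
Lemma alpha_alphaIf N b f : alpha N (alphaIf N b f) = alphaIf N (negb b) f.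
Proof. destruct b; simpl; [apply alpha_alpha|reflexivity]. Qed.
Instance alphaIf_proper N b : Proper (eqN N ==> eqN N) (alphaIf N b).
Proof. destruct b; simpl; [apply alpha_proper|repeat intro; auto]. Qed.

Lemma mul_comm N b f g : HomogN N b g -> eqN N (sfmul N f g) (sfmul N g (alphaIf N b f)).
Proof. revert b f g; induction N; intros b f g Hg.
  - apply eqN_0. intro x. rewrite !mul0. destruct b; simpl; [|ring].
    rewrite alpha0. specialize (Hg 0%nat x ltac:(simpl; lia)). rewrite alpha0 in Hg.
    unfold sfscal in Hg. simpl in Hg. assert (g 0%nat x = 0) as -> by lra. ring.
  - apply eqN_S. split.
    + rewrite !mulS_lo, alphaIf_lo. apply IHN, hom_lo; auto.
    + rewrite mulS_hi, mulS_hi, alphaIf_hi, alphaIf_lo, alpha_alphaIf.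
      pose proof (hom_lo _ _ _ Hg) as Hg0. unfold HomogN in Hg0. rewrite Hg0.
      rewrite (IHN (negb b) f (shift N g)) by (apply hom_hi; auto).
      rewrite mul_scal_r, mul_scal_r, (IHN b (shift N f) g) by auto. apply eq_eqN, add_comm. Qed.

Lemma dOd_alpha N a f : (a < N)%nat -> dOd a (alpha N f) = sfscal (-1) (alpha N (dOd a f)).
Proof. intros Ha. ext2. unfold dOd, alpha, sfscal. destruct (Nat.testbit x a) eqn:E; [ring|].
  rewrite popc_lor by auto. assert (Nat.ltb a N = true) as -> by (apply Nat.ltb_lt; lia).
  rewrite Nat.add_1_r. simpl. ring. Qed.

Lemma dOd_dOd a b f : dOd a (dOd b f) = sfscal (-1) (dOd b (dOd a f)).
Proof. ext2. rename x into K. unfold dOd, sfscal.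
  destruct (Nat.eq_dec a b).
  - subst. destruct (Nat.testbit K b); [ring|]. rewrite Nat.lor_spec, Nat.pow2_bits_true, orb_true_r. ring.
  - rewrite (testbit_lor_ne K a b), (testbit_lor_ne K b a) by auto.
    destruct (Nat.testbit K a) eqn:Ea, (Nat.testbit K b) eqn:Eb; try ring.
    rewrite (popc_lor b K a Ea), (popc_lor a K b Eb).
    rewrite <- !Nat.lor_assoc, (Nat.lor_comm (2^a)).
    destruct (Nat.ltb_spec a b), (Nat.ltb_spec b a); try lia;
      rewrite ?Nat.add_0_r, ?Nat.add_1_r; simpl; ring. Qed.

Lemma dOd_const a c : dOd a (sfconst c) = zero.
Proof. ext2. unfold dOd, sfconst, zero. destruct (Nat.testbit x a) eqn:E; [reflexivity|].
  destruct (Nat.eqb_spec (Nat.lor x (2^a)) 0) as [E0|E0]; [|ring].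
  exfalso. assert (Nat.testbit (Nat.lor x (2^a)) a = true) as HH
    by (rewrite Nat.lor_spec, Nat.pow2_bits_true; apply orb_true_r).
  rewrite E0, Nat.bits_0 in HH. discriminate. Qed.

Lemma dOd_leibniz N a f g : (a < N)%nat ->
  eqN N (dOd a (sfmul N f g)) (sfadd (sfmul N (dOd a f) g) (sfmul N (alpha N f) (dOd a g))).
Proof. revert a f g; induction N; intros a f g Ha; [lia|].
  apply eqN_S. destruct (Nat.eq_dec a N) as [->|Ha'].
  - split.
    + rewrite dOdtop_lo, mulS_hi, !mulS_lo, !dOdtop_lo, alphaS_lo.
      rewrite alpha_add, !alpha_mul, alpha_alpha. apply eq_eqN, add_comm.
    + rewrite dOdtop_hi, shift_add, mulS_hi, mulS_hi, !dOdtop_hi, alphaS_hi, !dOdtop_lo,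
        alpha_alpha, mul_zero_l, mul_zero_r, add_zero_l, add_zero_r, mul_scal_l.
      rewrite add_opp. reflexivity.
  - assert (a < N)%nat as HaN by lia. split.
    + rewrite (dOd_eqN _ _ _ _ HaN (mulS_lo N f g)), !mulS_lo, alphaS_lo. apply IHN; auto.
    + rewrite dOd_shift by auto. rewrite shift_add, (mulS_hi N (dOd a f) g), (mulS_hi N (alpha (S N) f)).
      rewrite (dOd_eqN _ _ _ _ HaN (mulS_hi N f g)), dOd_add, !IHN by auto.
      rewrite !dOd_shift by auto. rewrite alphaS_hi, alphaS_lo, dOd_alpha by lia.
      rewrite !mul_scal_l, !mul_scal_r.
      intros K x HK. unfold sfadd, sfscal. ring. Qed.

Definition HasD (i : nat) (h : pt -> R) (x : pt) (l : R) : Prop :=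
  derivable_pt_lim (fun s => h (upd x i s)) (x i) l.

Lemma pd_spec i h x l : HasD i h x l -> pd i h x = l.
Proof. intros H. unfold pd.
  assert (exists l, derivable_pt_lim (fun s => h (upd x i s)) (x i) l) as E by (exists l; exact H).
  pose proof (epsilon_spec (inhabits 0) _ E) as H2.
  eapply uniqueness_limite; eauto. Qed.

Lemma upd_same x i : upd x i (x i) = x.
Proof. apply functional_extensionality. intro j. unfold upd. destruct (Nat.eqb_spec j i); subst; auto. Qed.

Lemma HasD_plus i f g x l1 l2 : HasD i f x l1 -> HasD i g x l2 ->
  HasD i (fun y => f y + g y) x (l1 + l2).
Proof. intros. apply (derivable_pt_lim_plus _ _ _ _ _ H H0). Qed.
Lemma HasD_mult i f g x l1 l2 : HasD i f x l1 -> HasD i g x l2 ->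
  HasD i (fun y => f y * g y) x (l1 * g x + f x * l2).
Proof. intros. pose proof (derivable_pt_lim_mult _ _ _ _ _ H H0). unfold mult_fct in H1.
  rewrite upd_same in H1. exact H1. Qed.
Lemma HasD_const i c x : HasD i (fun _ => c) x 0.
Proof. apply (derivable_pt_lim_const c). Qed.
Lemma HasD_scal i c f x l : HasD i f x l -> HasD i (fun y => c * f y) x (c * l).
Proof. intros. apply (derivable_pt_lim_scal _ c _ _ H). Qed.
Lemma HasD_ext i f g x l : (forall y, f y = g y) -> HasD i f x l -> HasD i g x l.
Proof. intros E H. replace g with f; auto. apply functional_extensionality; auto. Qed.
Lemma HasD_coord i k x : HasD i (fun y => y k) x (if Nat.eqb k i then 1 else 0).
Proof. unfold HasD, upd. destruct (Nat.eqb_spec k i).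
  - apply derivable_pt_lim_id.
  - apply (derivable_pt_lim_const (x k)). Qed.
Lemma HasD_Rsum i n (F : nat -> pt -> R) (L : nat -> R) x :
  (forall k, (k < n)%nat -> HasD i (F k) x (L k)) ->
  HasD i (fun y => Rsum n (fun k => F k y)) x (Rsum n L).
Proof. induction n; intros H.
  - eapply HasD_ext; [|apply (HasD_const i 0)]. intros; reflexivity.
  - rewrite Rsum_S. eapply HasD_ext. 2: apply HasD_plus; [apply IHn; intros; apply H; lia|apply H; lia].
    intros. rewrite Rsum_S. reflexivity. Qed.

Definition D1 (m : nat) (h : pt -> R) : Prop := forall i x, (i < m)%nat -> HasD i h x (pd i h x).

Lemma pd_plus m i f g x : (i < m)%nat -> D1 m f -> D1 m g ->
  pd i (fun y => f y + g y) x = pd i f x + pd i g x.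
Proof. intros. apply pd_spec, HasD_plus; auto. Qed.
Lemma pd_mult m i f g x : (i < m)%nat -> D1 m f -> D1 m g ->
  pd i (fun y => f y * g y) x = pd i f x * g x + f x * pd i g x.
Proof. intros. apply pd_spec, HasD_mult; auto. Qed.
Lemma pd_scal m i c f x : (i < m)%nat -> D1 m f -> pd i (fun y => c * f y) x = c * pd i f x.
Proof. intros. apply pd_spec, HasD_scal; auto. Qed.
Lemma pd_const i c x : pd i (fun _ => c) x = 0.
Proof. apply pd_spec, HasD_const. Qed.
Lemma pd_coord i k x : pd i (fun y => y k) x = if Nat.eqb k i then 1 else 0.
Proof. apply pd_spec, HasD_coord. Qed.
Lemma pd_Rsum m i n F x : (i < m)%nat -> (forall k, (k < n)%nat -> D1 m (F k)) ->
  pd i (fun y => Rsum n (fun k => F k y)) x = Rsum n (fun k => pd i (F k) x).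
Proof. intros. apply pd_spec, HasD_Rsum. intros. apply H0; auto. Qed.

Lemma D1_plus m f g : D1 m f -> D1 m g -> D1 m (fun y => f y + g y).
Proof. intros Hf Hg i x Hi. rewrite (pd_plus m) by auto. apply HasD_plus; auto. Qed.
Lemma D1_mult m f g : D1 m f -> D1 m g -> D1 m (fun y => f y * g y).
Proof. intros Hf Hg i x Hi. rewrite (pd_mult m) by auto. apply HasD_mult; auto. Qed.
Lemma D1_scal m c f : D1 m f -> D1 m (fun y => c * f y).
Proof. intros Hf i x Hi. rewrite (pd_scal m) by auto. apply HasD_scal; auto. Qed.
Lemma D1_const m c : D1 m (fun _ => c).
Proof. intros i x Hi. rewrite pd_const. apply HasD_const. Qed.
Lemma D1_coord m k : D1 m (fun y => y k).
Proof. intros i x Hi. rewrite pd_coord. apply HasD_coord. Qed.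
Lemma D1_Rsum m n F : (forall k, (k < n)%nat -> D1 m (F k)) -> D1 m (fun y => Rsum n (fun k => F k y)).
Proof. intros H i x Hi. rewrite (pd_Rsum m) by auto. apply HasD_Rsum. intros. apply H; auto. Qed.
Lemma D1_if m (b : bool) f g : D1 m f -> D1 m g -> D1 m (fun y => if b then f y else g y).
Proof. destruct b; auto. Qed.
Lemma pd_ext i f g x : (forall y, f y = g y) -> pd i f x = pd i g x.
Proof. intros E. replace g with f; auto. apply functional_extensionality; auto. Qed.

Definition Sup (N : nat) (f : SF) : Prop := forall K x, (2 ^ N <= K)%nat -> f K x = 0.
Definition C1 (m : nat) (f : SF) : Prop := forall K, D1 m (f K).
Definition Reg1 (m N : nat) (f : SF) : Prop := Sup N f /\ C1 m f.
Definition Reg2 (m N : nat) (f : SF) : Prop := Reg1 m N f /\ (forall i, (i < m)%nat -> C1 m (dEv i f)) /\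
  (forall i j K x, (i < m)%nat -> (j < m)%nat -> pd i (pd j (f K)) x = pd j (pd i (f K)) x).

Lemma Sup_eq N f g : Sup N f -> Sup N g -> eqN N f g -> f = g.
Proof. intros Hf Hg H. ext2. destruct (Nat.lt_ge_cases x (2^N)).
  - apply H; auto. - rewrite Hf, Hg; auto. Qed.

Lemma Sup_zero N : Sup N zero.
Proof. intros K x _. reflexivity. Qed.
Lemma Sup_const N c : Sup N (sfconst c).
Proof. intros K x H. unfold sfconst. pose proof (Nat.pow_nonzero 2 N).
  destruct (Nat.eqb_spec K 0); [lia|reflexivity]. Qed.
Lemma Sup_add N f g : Sup N f -> Sup N g -> Sup N (sfadd f g).
Proof. intros Hf Hg K x H. unfold sfadd. rewrite Hf, Hg; auto; ring. Qed.
Lemma Sup_scal N c f : Sup N f -> Sup N (sfscal c f).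
Proof. intros Hf K x H. unfold sfscal. rewrite Hf; auto; ring. Qed.
Lemma Sup_alpha N f : Sup N f -> Sup N (alpha N f).
Proof. intros Hf K x H. unfold alpha. rewrite Hf; auto; ring. Qed.
Lemma Sup_alphaIf N b f : Sup N f -> Sup N (alphaIf N b f).
Proof. destruct b; simpl; auto using Sup_alpha. Qed.
Lemma Sup_mul N f g : Sup N g -> Sup N (sfmul N f g).
Proof. intros Hg K x H. unfold sfmul. apply Rsum_zero. intros I HI.
  destruct (Nat.eqb _ _); [|reflexivity]. rewrite Hg; [ring|].
  destruct (Nat.lt_ge_cases (Nat.lxor K I) (2^N)) as [Hl|Hl]; auto.
  exfalso. assert (forall b, (N <= b)%nat -> Nat.testbit K b = false).
  { intros b Hb. pose proof (lt_pow2_bits N I HI b Hb) as H1. pose proof (lt_pow2_bits N _ Hl b Hb) as H2.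
    rewrite Nat.lxor_spec, H1 in H2. destruct (Nat.testbit K b); auto. }
  pose proof (bits_lt_pow2 N K H0). lia. Qed.
Lemma Sup_dOd N a f : Sup N f -> Sup N (dOd a f).
Proof. intros Hf K x H. unfold dOd. destruct (Nat.testbit _ _); [reflexivity|]. rewrite Hf; [ring|].
  destruct (Nat.lt_ge_cases (Nat.lor K (2^a)) (2^N)) as [Hl|Hl]; auto. exfalso.
  assert (K < 2^N)%nat; [|lia]. apply bits_lt_pow2. intros b Hb.
  pose proof (lt_pow2_bits N _ Hl b Hb) as H2. rewrite Nat.lor_spec in H2. destruct (Nat.testbit K b); auto. Qed.
Lemma Sup_dEv N i f : Sup N f -> Sup N (dEv i f).
Proof. intros Hf K x H. unfold dEv. rewrite (pd_ext i _ (fun _ => 0)). apply pd_const.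
  intros; apply Hf; auto. Qed.
Lemma Sup_sum N n F : (forall k, (k < n)%nat -> Sup N (F k)) -> Sup N (sfsum n F).
Proof. intros H K x HK. unfold sfsum. apply Rsum_zero. intros. apply H; auto. Qed.
Lemma Sup_coord m N k : (k < m + N)%nat -> Sup N (coord m k).
Proof. intros Hk K x H. unfold coord. destruct (Nat.ltb_spec k m).
  - pose proof (Nat.pow_nonzero 2 N). destruct (Nat.eqb_spec K 0); [lia|reflexivity].
  - assert (2 ^ (k - m) < 2 ^ N)%nat by (apply pow2_lt; lia).
    destruct (Nat.eqb_spec K (2 ^ (k - m))); [lia|reflexivity]. Qed.

Lemma C1_zero m : C1 m zero.
Proof. intro K. apply D1_const. Qed.
Lemma C1_const m c : C1 m (sfconst c).
Proof. intro K. unfold sfconst. apply D1_const. Qed.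
Lemma C1_add m f g : C1 m f -> C1 m g -> C1 m (sfadd f g).
Proof. intros Hf Hg K. apply D1_plus; auto. Qed.
Lemma C1_scal m c f : C1 m f -> C1 m (sfscal c f).
Proof. intros Hf K. apply D1_scal; auto. Qed.
Lemma C1_alpha m N f : C1 m f -> C1 m (alpha N f).
Proof. intros Hf K. apply D1_scal; auto. Qed.
Lemma C1_alphaIf m N b f : C1 m f -> C1 m (alphaIf N b f).
Proof. destruct b; simpl; auto using C1_alpha. Qed.
Lemma C1_mul m N f g : C1 m f -> C1 m g -> C1 m (sfmul N f g).
Proof. intros Hf Hg K. unfold sfmul. apply D1_Rsum. intros I _. apply D1_if; [|apply D1_const].
  apply D1_mult; [apply D1_scal|]; auto. Qed.
Lemma C1_dOd m a f : C1 m f -> C1 m (dOd a f).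
Proof. intros Hf K. unfold dOd. apply D1_if; [apply D1_const|]. apply D1_scal; auto. Qed.
Lemma C1_sum m n F : (forall k, (k < n)%nat -> C1 m (F k)) -> C1 m (sfsum n F).
Proof. intros H K. unfold sfsum. apply D1_Rsum. intros. apply H; auto. Qed.
Lemma C1_coord m k : C1 m (coord m k).
Proof. intros K. unfold coord. destruct (Nat.ltb k m); apply D1_if; auto using D1_const, D1_coord. Qed.

Lemma dEv_add m i f g : (i < m)%nat -> C1 m f -> C1 m g -> dEv i (sfadd f g) = sfadd (dEv i f) (dEv i g).
Proof. intros. ext2. unfold dEv, sfadd. apply (pd_plus m); auto. Qed.
Lemma dEv_scal m i c f : (i < m)%nat -> C1 m f -> dEv i (sfscal c f) = sfscal c (dEv i f).
Proof. intros. ext2. unfold dEv, sfscal. apply (pd_scal m); auto. Qed.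
Lemma dEv_zero i : dEv i zero = zero.
Proof. ext2. unfold dEv, zero. apply pd_const. Qed.
Lemma dEv_const i c : dEv i (sfconst c) = zero.
Proof. ext2. unfold dEv, sfconst, zero. apply pd_const. Qed.
Lemma dEv_alpha m N i f : (i < m)%nat -> C1 m f -> dEv i (alpha N f) = alpha N (dEv i f).
Proof. intros. ext2. unfold dEv, alpha. apply (pd_scal m); auto. Qed.
Lemma dEv_dOd m i a f : (i < m)%nat -> C1 m f -> dEv i (dOd a f) = dOd a (dEv i f).
Proof. intros. ext2. unfold dEv, dOd. destruct (Nat.testbit _ _). apply pd_const. apply (pd_scal m); auto. Qed.
Lemma dEv_mul m N i f g : (i < m)%nat -> C1 m f -> C1 m g ->
  dEv i (sfmul N f g) = sfadd (sfmul N (dEv i f) g) (sfmul N f (dEv i g)).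
Proof. intros Hi Hf Hg. ext2. rename x into K, x0 into x. unfold dEv, sfmul, sfadd.
  rewrite <- Rsum_plus, (pd_Rsum m); [|exact Hi|].
  2:{ intros I _. apply D1_if; [apply D1_mult; [apply D1_scal|]|apply D1_const]; auto. }
  apply Rsum_ext. intros I _. destruct (Nat.eqb _ _).
  - rewrite (pd_mult m), (pd_scal m) by (auto using D1_scal). ring.
  - rewrite pd_const. ring. Qed.
Lemma dEv_coord m i k : (i < m)%nat -> dEv i (coord m k) = sfconst (if Nat.eqb k i then 1 else 0).
Proof. intros. ext2. unfold dEv, coord, sfconst. destruct (Nat.ltb_spec k m).
  - destruct (Nat.eqb x 0). apply pd_coord. apply pd_const.
  - destruct (Nat.eqb_spec k i); [lia|]. destruct (Nat.eqb x _), (Nat.eqb x 0); apply pd_const. Qed.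

Lemma C1_dEv_of_reg2 m N i f : Reg2 m N f -> (i < m)%nat -> C1 m (dEv i f).
Proof. intros [_ [H _]] Hi. auto. Qed.
Lemma dEv_dEv m N i j f : Reg2 m N f -> (i < m)%nat -> (j < m)%nat ->
  dEv i (dEv j f) = dEv j (dEv i f).
Proof. intros [_ [_ H]] Hi Hj. ext2. unfold dEv. apply H; auto. Qed.

Section Closure.
Variables (m N : nat).

Lemma reg1_zero : Reg1 m N zero. Proof. split; [apply Sup_zero|apply C1_zero]. Qed.
Lemma reg1_const c : Reg1 m N (sfconst c). Proof. split; [apply Sup_const|apply C1_const]. Qed.
Lemma reg1_coord k : (k < m + N)%nat -> Reg1 m N (coord m k).
Proof. split; [apply Sup_coord; auto|apply C1_coord]. Qed.
Lemma reg1_add f g : Reg1 m N f -> Reg1 m N g -> Reg1 m N (sfadd f g).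
Proof. intros [] []; split; auto using Sup_add, C1_add. Qed.
Lemma reg1_scal c f : Reg1 m N f -> Reg1 m N (sfscal c f).
Proof. intros []; split; auto using Sup_scal, C1_scal. Qed.
Lemma reg1_alpha f : Reg1 m N f -> Reg1 m N (alpha N f).
Proof. intros []; split; auto using Sup_alpha, C1_alpha. Qed.
Lemma reg1_alphaIf b f : Reg1 m N f -> Reg1 m N (alphaIf N b f).
Proof. intros []; split; auto using Sup_alphaIf, C1_alphaIf. Qed.
Lemma reg1_mul f g : Reg1 m N f -> Reg1 m N g -> Reg1 m N (sfmul N f g).
Proof. intros [] []; split; auto using Sup_mul, C1_mul. Qed.
Lemma reg1_dOd a f : Reg1 m N f -> Reg1 m N (dOd a f).
Proof. intros []; split; auto using Sup_dOd, C1_dOd. Qed.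
Lemma reg1_sum n F : (forall k, (k < n)%nat -> Reg1 m N (F k)) -> Reg1 m N (sfsum n F).
Proof. intros H; split; [apply Sup_sum|apply C1_sum]; intros; apply H; auto. Qed.
Lemma reg1_dEv i f : (i < m)%nat -> Reg2 m N f -> Reg1 m N (dEv i f).
Proof. intros Hi [[H1 H2] [H3 H4]]. split; auto using Sup_dEv. Qed.
Lemma reg2_reg1 f : Reg2 m N f -> Reg1 m N f.
Proof. intros []; auto. Qed.

Lemma reg2_intro f : Reg1 m N f -> (forall i : nat, (i < m)%nat -> C1 m (dEv i f)) ->
  (forall i j : nat, (i < m)%nat -> (j < m)%nat -> dEv i (dEv j f) = dEv j (dEv i f)) -> Reg2 m N f.
Proof. intros H1 H2 H3. split; [auto|split; auto]. intros i j K x Hi Hj.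
  pose proof (H3 i j Hi Hj). apply (f_equal (fun h => h K x)) in H. exact H. Qed.

Lemma reg2_zero : Reg2 m N zero.
Proof. apply reg2_intro. apply reg1_zero. intros; rewrite dEv_zero; apply C1_zero.
  intros; rewrite !dEv_zero; auto. Qed.
Lemma reg2_const c : Reg2 m N (sfconst c).
Proof. apply reg2_intro. apply reg1_const. intros; rewrite dEv_const; apply C1_zero.
  intros; rewrite !dEv_const, !dEv_zero; auto. Qed.
Lemma reg2_coord k : (k < m + N)%nat -> Reg2 m N (coord m k).
Proof. intros Hk. apply reg2_intro. apply reg1_coord; auto. intros; rewrite dEv_coord by auto; apply C1_const.
  intros. rewrite !dEv_coord, !dEv_const; auto. Qed.
Lemma reg2_add f g : Reg2 m N f -> Reg2 m N g -> Reg2 m N (sfadd f g).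
Proof. intros Hf Hg. pose proof (reg2_reg1 _ Hf) as [_ Cf]. pose proof (reg2_reg1 _ Hg) as [_ Cg].
  apply reg2_intro. apply reg1_add; apply reg2_reg1; auto.
  - intros. rewrite (dEv_add m) by auto. apply C1_add; apply (C1_dEv_of_reg2 m N); auto.
  - intros. rewrite !(dEv_add m) by (eauto using C1_dEv_of_reg2).
    rewrite (dEv_dEv m N i j f), (dEv_dEv m N i j g) by auto. reflexivity. Qed.
Lemma reg2_scal c f : Reg2 m N f -> Reg2 m N (sfscal c f).
Proof. intros Hf. pose proof (reg2_reg1 _ Hf) as [_ Cf].
  apply reg2_intro. apply reg1_scal; apply reg2_reg1; auto.
  - intros. rewrite (dEv_scal m) by auto. apply C1_scal; apply (C1_dEv_of_reg2 m N); auto.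
  - intros. rewrite !(dEv_scal m) by (eauto using C1_dEv_of_reg2).
    rewrite (dEv_dEv m N i j f) by auto. reflexivity. Qed.
Lemma reg2_alpha f : Reg2 m N f -> Reg2 m N (alpha N f).
Proof. intros Hf. pose proof (reg2_reg1 _ Hf) as [_ Cf].
  apply reg2_intro. apply reg1_alpha; apply reg2_reg1; auto.
  - intros. rewrite (dEv_alpha m) by auto. apply C1_alpha; apply (C1_dEv_of_reg2 m N); auto.
  - intros. rewrite !(dEv_alpha m) by (eauto using C1_dEv_of_reg2).
    rewrite (dEv_dEv m N i j f) by auto. reflexivity. Qed.
Lemma reg2_alphaIf b f : Reg2 m N f -> Reg2 m N (alphaIf N b f).
Proof. destruct b; simpl; auto using reg2_alpha. Qed.
Lemma reg2_mul f g : Reg2 m N f -> Reg2 m N g -> Reg2 m N (sfmul N f g).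
Proof. intros Hf Hg. pose proof (reg2_reg1 _ Hf) as [_ Cf]. pose proof (reg2_reg1 _ Hg) as [_ Cg].
  apply reg2_intro. apply reg1_mul; apply reg2_reg1; auto.
  - intros. rewrite (dEv_mul m) by auto. apply C1_add; apply C1_mul; eauto using C1_dEv_of_reg2.
  - intros. rewrite !(dEv_mul m) by auto.
    rewrite !(dEv_add m) by (eauto using C1_mul, C1_dEv_of_reg2).
    rewrite !(dEv_mul m) by (eauto using C1_dEv_of_reg2).
    rewrite (dEv_dEv m N i j f), (dEv_dEv m N i j g) by auto.
    ext2. unfold sfadd. ring. Qed.
Lemma reg2_sum n F : (forall k, (k < n)%nat -> Reg2 m N (F k)) -> Reg2 m N (sfsum n F).
Proof. induction n; intros H.
  - replace (sfsum 0 F) with zero by (ext2; reflexivity). apply reg2_zero.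
  - replace (sfsum (S n) F) with (sfadd (sfsum n F) (F n)) by (ext2; unfold sfsum, sfadd; rewrite Rsum_S; reflexivity).
    apply reg2_add; auto. Qed.

End Closure.

Lemma Sup_of_reg1 m N f : Reg1 m N f -> Sup N f.
Proof. intros []; auto. Qed.

Lemma Sup_dd m N k f : Sup N f -> Sup N (dd m k f).
Proof. intros. unfold dd. destruct (Nat.ltb k m); [apply Sup_dEv|apply Sup_dOd]; auto. Qed.

Definition Homog (N : nat) (b : bool) (g : SF) : Prop := alpha N g = sfscal (sgn b) g.

Lemma sfconst_scal c : sfconst c = sfscal c (sfconst 1).
Proof. ext2. unfold sfconst, sfscal. destruct (Nat.eqb _ _); ring. Qed.

Section SuperCalculus.
Variables (m N : nat).

Lemma mul_assoc_S f g h : Sup N h -> sfmul N (sfmul N f g) h = sfmul N f (sfmul N g h).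
Proof. intros. apply (Sup_eq N); auto using Sup_mul. apply mul_assoc. Qed.
Lemma alpha_mul_S f g : Sup N g -> alpha N (sfmul N f g) = sfmul N (alpha N f) (alpha N g).
Proof. intros. apply (Sup_eq N); auto using Sup_mul, Sup_alpha. apply alpha_mul. Qed.
Lemma mul_one_l_S f : Sup N f -> sfmul N (sfconst 1) f = f.
Proof. intros. apply (Sup_eq N); auto using Sup_mul. apply mul_one_l. Qed.
Lemma mul_one_r_S f : Sup N f -> sfmul N f (sfconst 1) = f.
Proof. intros. apply (Sup_eq N); auto using Sup_mul, Sup_const. apply mul_one_r. Qed.
Lemma mul_const_l f c : Sup N f -> sfmul N (sfconst c) f = sfscal c f.
Proof. intros. rewrite sfconst_scal, mul_scal_l, mul_one_l_S; auto. Qed.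
Lemma mul_const_r f c : Sup N f -> sfmul N f (sfconst c) = sfscal c f.
Proof. intros. rewrite sfconst_scal, mul_scal_r, mul_one_r_S; auto. Qed.
Lemma mul_comm_S b f g : Sup N f -> Sup N g -> Homog N b g -> sfmul N f g = sfmul N g (alphaIf N b f).
Proof. intros Hf Hg Hh. apply (Sup_eq N); auto using Sup_mul, Sup_alphaIf. apply mul_comm.
  unfold HomogN, Homog in *. rewrite Hh. reflexivity. Qed.
Lemma dOd_leibniz_S a f g : (a < N)%nat -> Sup N g ->
  dOd a (sfmul N f g) = sfadd (sfmul N (dOd a f) g) (sfmul N (alpha N f) (dOd a g)).
Proof. intros. apply (Sup_eq N); auto using Sup_mul, Sup_add, Sup_dOd. apply dOd_leibniz; auto. Qed.

Lemma dOd_beyond a f : (N <= a)%nat -> Sup N f -> dOd a f = zero.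
Proof. intros Ha Hf. ext2. unfold dOd, zero.
  destruct (Nat.testbit _ _); [reflexivity|]. rewrite Hf; [ring|].
  assert (Nat.testbit (Nat.lor x (2^a)) a = true) as HH
    by (rewrite Nat.lor_spec, Nat.pow2_bits_true; apply orb_true_r).
  destruct (Nat.lt_ge_cases (Nat.lor x (2^a)) (2^N)) as [Hl|Hl]; auto.
  rewrite (lt_pow2_bits N _ Hl) in HH by lia. discriminate. Qed.

Lemma dd_add k f g : Reg1 m N f -> Reg1 m N g -> dd m k (sfadd f g) = sfadd (dd m k f) (dd m k g).
Proof. intros [_ Hf] [_ Hg]. unfold dd. destruct (Nat.ltb_spec k m).
  - apply (dEv_add m); auto. - apply dOd_add. Qed.
Lemma dd_scal k c f : Reg1 m N f -> dd m k (sfscal c f) = sfscal c (dd m k f).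
Proof. intros [_ Hf]. unfold dd. destruct (Nat.ltb_spec k m).
  - apply (dEv_scal m); auto. - apply dOd_scal. Qed.
Lemma dd_zero k : dd m k zero = zero.
Proof. unfold dd. destruct (Nat.ltb k m); [apply dEv_zero|apply dOd_zero]. Qed.
Lemma dd_const k c : dd m k (sfconst c) = zero.
Proof. unfold dd. destruct (Nat.ltb k m); [apply dEv_const|apply dOd_const]. Qed.
Lemma dd_sum k n F : (forall j, (j < n)%nat -> Reg1 m N (F j)) ->
  dd m k (sfsum n F) = sfsum n (fun j => dd m k (F j)).
Proof. induction n; intros H.
  - replace (sfsum 0 F) with zero by (ext2; reflexivity). rewrite dd_zero. ext2. reflexivity.
  - replace (sfsum (S n) F) with (sfadd (sfsum n F) (F n)) by (ext2; unfold sfsum, sfadd; rewrite Rsum_S; reflexivity).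
    replace (sfsum (S n) (fun j => dd m k (F j))) with (sfadd (sfsum n (fun j => dd m k (F j))) (dd m k (F n)))
      by (ext2; unfold sfsum, sfadd; rewrite Rsum_S; reflexivity).
    rewrite dd_add, IHn; auto. apply reg1_sum. auto. Qed.

Lemma dd_mul k f g : Reg1 m N f -> Reg1 m N g ->
  dd m k (sfmul N f g) = sfadd (sfmul N (dd m k f) g) (sfmul N (alphaIf N (par m k) f) (dd m k g)).
Proof. intros [Sf Cf] [Sg Cg]. unfold dd, par. destruct (Nat.ltb_spec k m).
  - assert (Nat.leb m k = false) as -> by (apply Nat.leb_gt; lia). simpl. apply (dEv_mul m); auto.
  - assert (Nat.leb m k = true) as -> by (apply Nat.leb_le; lia). simpl.
    destruct (Nat.lt_ge_cases (k - m) N).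
    + apply dOd_leibniz_S; auto.
    + rewrite !(dOd_beyond (k - m)), mul_zero_l, mul_zero_r, add_zero_l
        by first [lia | auto using Sup_mul]. reflexivity. Qed.

Lemma dd_alpha k f : Reg1 m N f -> dd m k (alpha N f) = sfscal (sgn (par m k)) (alpha N (dd m k f)).
Proof. intros [Sf Cf]. unfold dd, par. destruct (Nat.ltb_spec k m).
  - assert (Nat.leb m k = false) as -> by (apply Nat.leb_gt; lia). simpl. rewrite scal_1. apply (dEv_alpha m); auto.
  - assert (Nat.leb m k = true) as -> by (apply Nat.leb_le; lia). simpl.
    destruct (Nat.lt_ge_cases (k - m) N).
    + apply dOd_alpha; auto.
    + rewrite !(dOd_beyond (k - m)), alpha_zero, scal_zero
        by first [lia | auto using Sup_alpha]. reflexivity. Qed.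
Lemma dd_alphaIf k b f : Reg1 m N f ->
  dd m k (alphaIf N b f) = sfscal (sgn (par m k && b)) (alphaIf N b (dd m k f)).
Proof. intros. destruct b; simpl. - rewrite andb_true_r. apply dd_alpha; auto.
  - rewrite andb_false_r. simpl. rewrite scal_1. reflexivity. Qed.

Lemma dd_dd j k f : Reg2 m N f ->
  dd m j (dd m k f) = sfscal (sgn (par m j && par m k)) (dd m k (dd m j f)).
Proof. intros Hf. pose proof (reg2_reg1 _ _ _ Hf) as [Sf Cf]. unfold dd, par.
  destruct (Nat.ltb_spec j m), (Nat.ltb_spec k m).
  - assert (Nat.leb m j = false) as -> by (apply Nat.leb_gt; lia). simpl. rewrite scal_1.
    apply (dEv_dEv m N); auto.
  - assert (Nat.leb m j = false) as -> by (apply Nat.leb_gt; lia). simpl. rewrite scal_1.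
    apply (dEv_dOd m); auto.
  - assert (Nat.leb m k = false) as -> by (apply Nat.leb_gt; lia). rewrite andb_false_r. simpl. rewrite scal_1.
    symmetry. apply (dEv_dOd m); auto.
  - assert (Nat.leb m k = true) as -> by (apply Nat.leb_le; lia).
    assert (Nat.leb m j = true) as -> by (apply Nat.leb_le; lia). simpl. apply dOd_dOd. Qed.

Lemma dd_coord k j : (j < m + N)%nat -> dd m k (coord m j) = sfconst (if Nat.eqb k j then 1 else 0).
Proof. intros Hj. unfold dd. destruct (Nat.ltb_spec k m).
  - rewrite (dEv_coord m) by auto. rewrite Nat.eqb_sym. reflexivity.
  - ext2. rename x into K. unfold dOd, coord, sfconst. destruct (Nat.ltb_spec j m).
    + destruct (Nat.eqb_spec k j); [lia|]. destruct (Nat.testbit K (k-m)) eqn:E.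
      * destruct (Nat.eqb K 0); reflexivity.
      * destruct (Nat.eqb_spec (Nat.lor K (2^(k-m))) 0) as [E0|E0].
        { exfalso. assert (Nat.testbit (Nat.lor K (2^(k-m))) (k-m) = true) as HH
            by (rewrite Nat.lor_spec, Nat.pow2_bits_true; apply orb_true_r).
          rewrite E0, Nat.bits_0 in HH. discriminate. }
        destruct (Nat.eqb K 0); ring.
    + destruct (Nat.testbit K (k-m)) eqn:E.
      * destruct (Nat.eqb_spec K 0); [subst; rewrite Nat.bits_0 in E; discriminate|].
        destruct (Nat.eqb k j); reflexivity.
      * rewrite lor_pow2_eq by auto.
        destruct (Nat.eqb_spec (k - m) (j - m)), (Nat.eqb_spec k j); try lia; simpl.
        { destruct (Nat.eqb_spec K 0); [subst; rewrite popc_0; ring|ring]. }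
        { destruct (Nat.eqb K 0); ring. } Qed.

Lemma reg1_dd k f : Reg2 m N f -> Reg1 m N (dd m k f).
Proof. intros Hf. unfold dd. destruct (Nat.ltb_spec k m).
  - apply reg1_dEv; auto. - apply reg1_dOd, reg2_reg1; auto. Qed.

End SuperCalculus.

Lemma sfsum_ext n F G : (forall k, (k < n)%nat -> F k = G k) -> sfsum n F = sfsum n G.
Proof. intros H. ext2. unfold sfsum. apply Rsum_ext. intros. rewrite H; auto. Qed.
Lemma sfsum_add n F G : sfsum n (fun k => sfadd (F k) (G k)) = sfadd (sfsum n F) (sfsum n G).
Proof. ext2. unfold sfsum, sfadd. apply Rsum_plus. Qed.
Lemma sfsum_scal n c F : sfsum n (fun k => sfscal c (F k)) = sfscal c (sfsum n F).
Proof. ext2. unfold sfsum, sfscal. apply Rsum_scal. Qed.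
Lemma sfsum_swap n n' F : sfsum n (fun i => sfsum n' (fun j => F i j)) = sfsum n' (fun j => sfsum n (fun i => F i j)).
Proof. ext2. unfold sfsum. apply Rsum_swap. Qed.
Lemma sfsum_zero n : sfsum n (fun _ => zero) = zero.
Proof. ext2. unfold sfsum, zero. apply Rsum_zero. auto. Qed.
Lemma mul_sum_l N n F h : sfmul N (sfsum n F) h = sfsum n (fun k => sfmul N (F k) h).
Proof. ext2. unfold sfmul, sfsum. rewrite (Rsum_swap n). apply Rsum_ext. intros I _.
  destruct (Nat.eqb _ _); [|symmetry; apply Rsum_zero; auto].
  match goal with |- ?s * Rsum n ?G * ?h = _ =>
    transitivity ((s * h) * Rsum n G); [ring|] end.
  rewrite <- Rsum_scal. apply Rsum_ext. intros. ring. Qed.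
Lemma mul_sum_r N n F h : sfmul N h (sfsum n F) = sfsum n (fun k => sfmul N h (F k)).
Proof. ext2. unfold sfmul, sfsum. rewrite (Rsum_swap n). apply Rsum_ext. intros I _.
  destruct (Nat.eqb _ _); [|symmetry; apply Rsum_zero; auto].
  match goal with |- ?s * ?h * Rsum n ?G = _ =>
    transitivity ((s * h) * Rsum n G); [ring|] end.
  rewrite <- Rsum_scal. apply Rsum_ext. intros. ring. Qed.
Lemma alpha_sum N n F : alpha N (sfsum n F) = sfsum n (fun k => alpha N (F k)).
Proof. ext2. unfold alpha, sfsum. rewrite <- Rsum_scal. reflexivity. Qed.

Lemma alphaIf_add N b f g : alphaIf N b (sfadd f g) = sfadd (alphaIf N b f) (alphaIf N b g).
Proof. destruct b; simpl; auto using alpha_add. Qed.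
Lemma alphaIf_scal N b c f : alphaIf N b (sfscal c f) = sfscal c (alphaIf N b f).
Proof. destruct b; simpl; auto using alpha_scal. Qed.
Lemma alphaIf_sum N b n F : alphaIf N b (sfsum n F) = sfsum n (fun k => alphaIf N b (F k)).
Proof. destruct b; simpl; auto using alpha_sum. Qed.
Lemma alphaIf_mul N b f g : Sup N g -> alphaIf N b (sfmul N f g) = sfmul N (alphaIf N b f) (alphaIf N b g).
Proof. destruct b; simpl; auto using alpha_mul_S. Qed.
Lemma alphaIf_alphaIf N b c f : alphaIf N b (alphaIf N c f) = alphaIf N (xorb b c) f.
Proof. destruct b, c; simpl; auto using alpha_alpha. Qed.
Lemma alphaIf_false N f : alphaIf N false f = f.
Proof. reflexivity. Qed.

Lemma hom_alphaIf N b c f : Homog N b f -> alphaIf N c f = sfscal (sgn (c && b)) f.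
Proof. intros H. destruct c; simpl. exact H. rewrite scal_1. reflexivity. Qed.
Lemma hom_scal N b c f : Homog N b f -> Homog N b (sfscal c f).
Proof. unfold Homog. intros H. rewrite alpha_scal, H, !scal_scal. f_equal. ring. Qed.
Lemma hom_add N b f g : Homog N b f -> Homog N b g -> Homog N b (sfadd f g).
Proof. unfold Homog. intros H1 H2. rewrite alpha_add, H1, H2, scal_add. reflexivity. Qed.
Lemma hom_sum N b n F : (forall k, (k < n)%nat -> Homog N b (F k)) -> Homog N b (sfsum n F).
Proof. unfold Homog. intros H. rewrite alpha_sum, <- sfsum_scal. apply sfsum_ext. auto. Qed.
Lemma hom_mul N b c f g : Sup N g -> Homog N b f -> Homog N c g -> Homog N (xorb b c) (sfmul N f g).
Proof. unfold Homog. intros S H1 H2. rewrite alpha_mul_S, H1, H2, mul_scal_l, mul_scal_r, scal_scal by auto.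
  f_equal. destruct b, c; simpl; ring. Qed.
Lemma hom_alpha N b f : Homog N b f -> Homog N b (alpha N f).
Proof. unfold Homog. intros H. rewrite H, alpha_scal, H. reflexivity. Qed.
Lemma hom_alphaIf_pres N b c f : Homog N b f -> Homog N b (alphaIf N c f).
Proof. destruct c; simpl; auto using hom_alpha. Qed.
Lemma hom_ext N b c f : b = c -> Homog N b f -> Homog N c f.
Proof. intros ->; auto. Qed.

Lemma hom_dd m N k b f : Reg1 m N f -> Homog N b f -> Homog N (xorb (par m k) b) (dd m k f).
Proof. unfold Homog. intros G H. pose proof (dd_alpha m N k f G) as E. rewrite H, (dd_scal m N) in E by auto.
  ext2. apply (f_equal (fun h => h x x0)) in E. unfold sfscal in *.
  destruct (par m k), b; simpl in *; lra. Qed.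

(* The two sides of the equivariance equation are expanded
   into the same elementary terms, up to a multiple of the anomaly
   sum_k (-1)^(~k xp) alpha^xp(S_k) d_k(div X). *)
Section DefectIdentity.
Variables (m N : nat) (X : VF) (xp : bool) (S : Sym1) (g : SF).
Hypothesis HX : forall j, Reg2 m N (X j).
Hypothesis HXh : forall j, Homog N (xorb (par m j) xp) (X j).
Hypothesis HS : forall k, Reg2 m N (S k).
Hypothesis Hg : Reg2 m N g.

(* Koszul sign (-1)^(~k xp) of moving d_k past X. *)
Definition ksign (k : nat) : R := sgn (par m k && xp).

Lemma reg1_vf f : Reg2 m N f -> Reg1 m N (vfapp m N X f).
Proof. intros. unfold vfapp. apply reg1_sum. intros. apply reg1_mul; [apply reg2_reg1; auto|apply reg1_dd; auto]. Qed.
Lemma reg1_div : Reg1 m N (divX m N X).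
Proof. unfold divX. apply reg1_sum. intros. apply reg1_dd. apply reg2_alphaIf. auto. Qed.

Ltac reg_tac := repeat first
  [ assumption | apply reg1_add | apply reg1_scal | apply reg1_mul | apply reg1_alpha | apply reg1_alphaIf
  | apply reg1_sum; intros | apply reg1_vf | apply reg1_div | apply reg1_const | apply reg1_zero
  | apply reg1_dd | apply reg2_add | apply reg2_scal | apply reg2_mul | apply reg2_alpha | apply reg2_alphaIf
  | apply reg2_sum; intros | apply reg2_reg1 | apply HX | apply HS | apply Hg ].
Ltac sup_tac := repeat first
  [ apply Sup_add | apply Sup_scal | apply Sup_mul | apply Sup_alpha | apply Sup_alphaIf
  | apply Sup_sum; intros | apply Sup_dd | apply Sup_dOd | apply Sup_const | apply Sup_zero
  | apply (Sup_of_reg1 m); assumption | apply (Sup_of_reg1 m); solve [reg_tac] ].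

Lemma vf_add f h : Reg1 m N f -> Reg1 m N h ->
  vfapp m N X (sfadd f h) = sfadd (vfapp m N X f) (vfapp m N X h).
Proof. intros. unfold vfapp. rewrite <- sfsum_add. apply sfsum_ext. intros.
  rewrite (dd_add m N), mul_add_r; auto. Qed.
Lemma vf_scal c f : Reg1 m N f -> vfapp m N X (sfscal c f) = sfscal c (vfapp m N X f).
Proof. intros. unfold vfapp. rewrite <- sfsum_scal. apply sfsum_ext. intros.
  rewrite (dd_scal m N), mul_scal_r; auto. Qed.
Lemma vf_sum n' F : (forall k, Reg1 m N (F k)) ->
  vfapp m N X (sfsum n' F) = sfsum n' (fun k => vfapp m N X (F k)).
Proof. intros. unfold vfapp. rewrite sfsum_swap. apply sfsum_ext. intros.
  rewrite (dd_sum m N), mul_sum_r; auto. Qed.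

Lemma X_graded_comm j u : Sup N u -> sfmul N (X j) (alphaIf N (par m j) u) = sfmul N (alphaIf N xp u) (X j).
Proof. intros Su. rewrite (mul_comm_S N (xorb (par m j) xp) (alphaIf N xp u) (X j)); auto.
  - rewrite alphaIf_alphaIf. f_equal. f_equal. destruct (par m j), xp; reflexivity.
  - apply Sup_alphaIf; auto.
  - sup_tac. Qed.

Lemma vf_leib f h : Reg1 m N f -> Reg1 m N h ->
  vfapp m N X (sfmul N f h) = sfadd (sfmul N (vfapp m N X f) h) (sfmul N (alphaIf N xp f) (vfapp m N X h)).
Proof. intros Gf Gh. unfold vfapp. rewrite mul_sum_l, mul_sum_r, <- sfsum_add. apply sfsum_ext. intros j _.
  rewrite (dd_mul m N) by auto. rewrite mul_add_r. f_equal.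
  - rewrite mul_assoc_S; auto. sup_tac.
  - rewrite <- mul_assoc_S, X_graded_comm, mul_assoc_S; auto.
    all: sup_tac. Qed.

Lemma div_hom : Homog N xp (divX m N X).
Proof. unfold divX. apply hom_sum. intros i _. eapply hom_ext; [|apply (hom_dd m N)].
  2: reg_tac. 2: apply hom_alphaIf_pres; apply HXh. destruct (par m i), xp; reflexivity. Qed.
Lemma dd_div_hom k : Homog N (xorb (par m k) xp) (dd m k (divX m N X)).
Proof. apply (hom_dd m N). apply reg1_div. apply div_hom. Qed.

Lemma div_comm f : Sup N f -> sfmul N (divX m N X) f = sfmul N (alphaIf N xp f) (divX m N X).
Proof. intros Sf. rewrite (mul_comm_S N xp (alphaIf N xp f) (divX m N X)).
  - rewrite alphaIf_alphaIf. destruct xp; reflexivity.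
  - apply Sup_alphaIf; auto. - apply (Sup_of_reg1 m), reg1_div. - apply div_hom. Qed.

Lemma alpha_dd_alpha k f : Reg1 m N f -> alphaIf N xp (dd m k (alphaIf N xp f)) = sfscal (ksign k) (dd m k f).
Proof. intros. rewrite (dd_alphaIf m N) by auto. rewrite alphaIf_scal, alphaIf_alphaIf.
  unfold ksign. destruct xp; reflexivity. Qed.

Lemma divX_alt : divX m N X = sfsum (m + N) (fun i => sfscal (sgn (par m i) * ksign i) (dd m i (X i))).
Proof. unfold divX. apply sfsum_ext. intros i _. rewrite (hom_alphaIf N _ _ _ (HXh i)).
  rewrite (dd_scal m N) by reg_tac. f_equal. unfold ksign. destruct (par m i), xp; simpl; ring. Qed.

Definition termXS : SF := sfsum (m+N) (fun k => sfmul N (vfapp m N X (S k)) (dd m k g)).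
Definition termSX : SF := sfsum (m+N) (fun k => sfmul N (alphaIf N xp (S k)) (vfapp m N X (dd m k g))).
Definition termJac : SF := sfsum (m+N) (fun k => sfscal (ksign k) (sfmul N (alphaIf N xp (S k))
                    (sfsum (m+N) (fun j => sfmul N (dd m k (X j)) (dd m j g))))).
Definition termDiv : SF := sfsum (m+N) (fun k => sfmul N (sfmul N (alphaIf N xp (S k)) (divX m N X)) (dd m k g)).
Definition anomaly : SF := sfsum (m+N) (fun k => sfscal (ksign k) (sfmul N (alphaIf N xp (S k)) (dd m k (divX m N X)))).

Lemma LieF_QAff_expand mu T : Reg1 m N T ->
  LieF m N mu X (QAff m N S T g) =
  sfadd (sfadd (sfadd termXS termSX) (sfadd (sfmul N (vfapp m N X T) g) (sfmul N (alphaIf N xp T) (vfapp m N X g))))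
        (sfscal mu (sfadd termDiv (sfmul N (sfmul N (divX m N X) T) g))).
Proof. intros GT. unfold LieF, QAff.
  rewrite vf_add by reg_tac. rewrite vf_sum by (intros; reg_tac).
  rewrite (sfsum_ext _ _ (fun k => sfadd (sfmul N (vfapp m N X (S k)) (dd m k g))
        (sfmul N (alphaIf N xp (S k)) (vfapp m N X (dd m k g))))).
  2:{ intros k _. apply vf_leib; reg_tac. }
  rewrite sfsum_add. rewrite vf_leib by reg_tac.
  rewrite mul_add_r, mul_sum_r. f_equal. f_equal. f_equal.
  - unfold termDiv. apply sfsum_ext. intros k _. rewrite <- mul_assoc_S by sup_tac. rewrite div_comm by sup_tac. reflexivity.
  - rewrite <- mul_assoc_S by sup_tac. reflexivity. Qed.

Lemma vf_dd_swap k : vfapp m N X (dd m k g) =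
  sfscal (ksign k) (sfsum (m+N) (fun j => sfmul N (alphaIf N (par m k) (X j)) (dd m k (dd m j g)))).
Proof. unfold vfapp. rewrite <- sfsum_scal. apply sfsum_ext. intros j _.
  rewrite (dd_dd m N j k g Hg), (hom_alphaIf N _ _ _ (HXh j)), mul_scal_l, mul_scal_r, !scal_scal.
  f_equal. unfold ksign. destruct (par m j), (par m k), xp; simpl; ring. Qed.

Lemma dd_vf k f : Reg2 m N f -> dd m k (vfapp m N X f) =
  sfsum (m+N) (fun j => sfadd (sfmul N (dd m k (X j)) (dd m j f)) (sfmul N (alphaIf N (par m k) (X j)) (dd m k (dd m j f)))).
Proof. intros. unfold vfapp. rewrite (dd_sum m N) by (intros; reg_tac). apply sfsum_ext. intros j _.
  apply (dd_mul m N); reg_tac. Qed.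

(* One summand of alpha^xp(Q_Aff(S + T)(alpha^xp L^l_X g)). *)
Lemma twisted_dd_LieF_expand l k : sfmul N (alphaIf N xp (S k)) (alphaIf N xp (dd m k (alphaIf N xp (LieF m N l X g)))) =
  sfadd (sfadd (sfmul N (alphaIf N xp (S k)) (vfapp m N X (dd m k g)))
               (sfscal (ksign k) (sfmul N (alphaIf N xp (S k)) (sfsum (m+N) (fun j => sfmul N (dd m k (X j)) (dd m j g))))))
        (sfscal l (sfadd (sfmul N (sfmul N (alphaIf N xp (S k)) (divX m N X)) (dd m k g))
                         (sfmul N (sfscal (ksign k) (sfmul N (alphaIf N xp (S k)) (dd m k (divX m N X)))) g))).
Proof. unfold LieF. rewrite alpha_dd_alpha by reg_tac.
  rewrite (dd_add m N) by reg_tac. rewrite (dd_scal m N) by reg_tac.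
  rewrite dd_vf by reg_tac. rewrite (dd_mul m N) by reg_tac.
  rewrite (hom_alphaIf N _ _ _ div_hom).
  rewrite vf_dd_swap. rewrite sfsum_add.
  repeat (rewrite ?mul_scal_l, ?mul_scal_r, ?mul_add_l, ?mul_add_r, ?scal_scal, ?scal_add).
  repeat (rewrite mul_assoc_S by sup_tac).
  ext2. unfold sfadd, sfscal, ksign. destruct (par m k && xp); simpl; ring. Qed.

Lemma reg1_LieF l : Reg1 m N (LieF m N l X g).
Proof. unfold LieF. reg_tac. Qed.

(* The sign-twisted term (-1)^(xp ~D) D(L^l_X g) of L_X D, for D = Q_Aff(S + T). *)
Lemma twisted_QAff_expand l T : Reg1 m N T ->
  alphaIf N xp (QAff m N S T (alphaIf N xp (LieF m N l X g))) =
  sfadd (sfadd (sfadd termSX termJac) (sfscal l (sfadd termDiv (sfmul N anomaly g))))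
        (sfadd (sfmul N (alphaIf N xp T) (vfapp m N X g)) (sfscal l (sfmul N (sfmul N (divX m N X) T) g))).
Proof. intros GT. pose proof (reg1_LieF l) as GL. unfold QAff.
  rewrite alphaIf_add, alphaIf_sum, alphaIf_mul by sup_tac.
  rewrite (sfsum_ext _ _ (fun k => sfadd (sfadd (sfmul N (alphaIf N xp (S k)) (vfapp m N X (dd m k g)))
               (sfscal (ksign k) (sfmul N (alphaIf N xp (S k)) (sfsum (m+N) (fun j => sfmul N (dd m k (X j)) (dd m j g))))))
        (sfscal l (sfadd (sfmul N (sfmul N (alphaIf N xp (S k)) (divX m N X)) (dd m k g))
                         (sfmul N (sfscal (ksign k) (sfmul N (alphaIf N xp (S k)) (dd m k (divX m N X)))) g))))).
  2:{ intros k _. rewrite alphaIf_mul by sup_tac. apply twisted_dd_LieF_expand. }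
  rewrite !sfsum_add, sfsum_scal, sfsum_add. unfold anomaly. rewrite mul_sum_l. f_equal.
  rewrite alphaIf_alphaIf, xorb_nilpotent, alphaIf_false. unfold LieF.
  rewrite mul_add_r, mul_scal_r, <- mul_assoc_S by sup_tac. rewrite (div_comm T) by sup_tac. reflexivity. Qed.

Lemma LsymH_eq d j : LsymH m N xp d X S j =
  sfadd (vfapp m N X (S j)) (sfadd (sfscal d (sfmul N (alphaIf N xp (S j)) (divX m N X)))
     (sfsum (m+N) (fun k => sfscal (- ksign k) (sfmul N (alphaIf N xp (S k)) (dd m k (X j)))))).
Proof. unfold LsymH, Jm. f_equal. f_equal.
  - rewrite divX_alt, mul_sum_r, <- !sfsum_scal. apply sfsum_ext. intros i _.
    rewrite !mul_scal_r, !scal_scal. f_equal. unfold ksign. ring.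
  - apply sfsum_ext. intros k _. rewrite mul_scal_r. reflexivity. Qed.

Lemma Qt_LsymH_expand d t : Qt m N t (LsymH m N xp d X S) g =
  sfadd (sfadd (sfadd termXS (sfscal (-1) termJac)) (sfscal d termDiv)) (sfscal t (sfmul N (divS m N (LsymH m N xp d X S)) g)).
Proof. unfold Qt, QAff. rewrite mul_scal_l. f_equal.
  rewrite (sfsum_ext _ _ (fun j => sfadd (sfadd (sfmul N (vfapp m N X (S j)) (dd m j g))
      (sfsum (m+N) (fun k => sfscal (- ksign k) (sfmul N (alphaIf N xp (S k)) (sfmul N (dd m k (X j)) (dd m j g))))))
      (sfscal d (sfmul N (sfmul N (alphaIf N xp (S j)) (divX m N X)) (dd m j g))))).
  2:{ intros j _. rewrite LsymH_eq, !mul_add_l, mul_sum_l, mul_scal_l.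
      rewrite (sfsum_ext _ _ (fun k => sfscal (- ksign k) (sfmul N (alphaIf N xp (S k)) (sfmul N (dd m k (X j)) (dd m j g))))).
      2:{ intros k _. rewrite mul_scal_l, mul_assoc_S by sup_tac. reflexivity. }
      ext2. unfold sfadd. ring. }
  rewrite !sfsum_add, sfsum_scal. f_equal. f_equal. unfold termJac.
  rewrite sfsum_swap, <- sfsum_scal. apply sfsum_ext. intros k _.
  rewrite mul_sum_r, <- !sfsum_scal. apply sfsum_ext. intros j _. rewrite scal_scal. f_equal. ring. Qed.

(* div(L_X S) is computed in three parts, the mixed term termMix cancelling. *)
Definition termMix : SF := sfsum (m+N) (fun j => sfsum (m+N) (fun i =>
   sfscal (sgn (par m j)) (alphaIf N (par m j) (sfmul N (dd m j (X i)) (dd m i (S j)))))).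

Lemma divS_vf_part : sfsum (m+N) (fun j => sfscal (sgn (par m j)) (alphaIf N (par m j) (dd m j (vfapp m N X (S j))))) =
  sfadd (vfapp m N X (divS m N S)) termMix.
Proof.
  rewrite (sfsum_ext _ _ (fun j => sfadd
     (sfsum (m+N) (fun i => sfscal (sgn (par m j)) (alphaIf N (par m j) (sfmul N (dd m j (X i)) (dd m i (S j))))))
     (sfsum (m+N) (fun i => sfscal (sgn (par m j)) (alphaIf N (par m j) (sfmul N (alphaIf N (par m j) (X i)) (dd m j (dd m i (S j))))))))).
  2:{ intros j _. rewrite dd_vf by reg_tac. rewrite alphaIf_sum, <- (sfsum_scal (m+N)), <- (sfsum_add (m+N)). apply sfsum_ext.
      intros i _. rewrite alphaIf_add, scal_add. reflexivity. }
  rewrite sfsum_add, add_comm. f_equal. symmetry. unfold vfapp at 1, divS.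
  rewrite (sfsum_ext _ _ (fun i => sfsum (m+N) (fun j => sfmul N (X i)
       (sfscal (sgn (par m j)) (dd m i (alphaIf N (par m j) (dd m j (S j)))))))).
  2:{ intros i _. rewrite (dd_sum m N) by (intros; reg_tac). rewrite mul_sum_r. apply sfsum_ext.
      intros j _. rewrite (dd_scal m N) by reg_tac. reflexivity. }
  rewrite (sfsum_swap (m+N)). apply sfsum_ext. intros j _. apply sfsum_ext. intros i _.
  rewrite (dd_alphaIf m N) by reg_tac. rewrite (dd_dd m N j i (S j)) by reg_tac.
  rewrite alphaIf_mul by sup_tac. rewrite alphaIf_alphaIf, xorb_nilpotent, alphaIf_false.
  rewrite !alphaIf_scal, !mul_scal_r, !scal_scal. f_equal. destruct (par m i), (par m j); simpl; ring. Qed.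

Ltac sign_cases b1 b2 := destruct b1, b2; unfold alphaIf; simpl; rewrite ?alpha_alpha; simpl;
  repeat f_equal; ring.

Lemma divS_div_part : sfsum (m+N) (fun j => sfscal (sgn (par m j)) (alphaIf N (par m j)
      (dd m j (sfmul N (alphaIf N xp (S j)) (divX m N X))))) =
  sfadd (sfmul N (divX m N X) (divS m N S)) anomaly.
Proof.
  rewrite (sfsum_ext _ _ (fun j => sfadd
     (sfscal (sgn (par m j)) (alphaIf N (par m j) (sfmul N (dd m j (alphaIf N xp (S j))) (divX m N X))))
     (sfscal (sgn (par m j)) (alphaIf N (par m j) (sfmul N (alphaIf N (par m j) (alphaIf N xp (S j))) (dd m j (divX m N X))))))).
  2:{ intros j _. rewrite (dd_mul m N) by reg_tac. rewrite alphaIf_add, scal_add. reflexivity. }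
  rewrite sfsum_add. f_equal.
  - unfold divS. rewrite mul_sum_r. apply sfsum_ext. intros j _.
    rewrite mul_scal_r, div_comm by sup_tac. rewrite (dd_alphaIf m N) by reg_tac.
    rewrite alphaIf_mul by sup_tac. rewrite (hom_alphaIf N _ _ _ div_hom).
    rewrite ?alphaIf_scal, ?mul_scal_l, ?mul_scal_r, ?scal_scal, ?alphaIf_alphaIf.
    sign_cases (par m j) xp.
  - unfold anomaly. apply sfsum_ext. intros j _.
    rewrite alphaIf_mul by sup_tac. rewrite (hom_alphaIf N _ _ _ (dd_div_hom j)).
    rewrite ?alphaIf_scal, ?mul_scal_l, ?mul_scal_r, ?scal_scal, ?alphaIf_alphaIf. unfold ksign.
    sign_cases (par m j) xp. Qed.

Lemma mul_comm_homog b Z Y : Homog N b Z -> Sup N Y -> Sup N Z -> sfmul N Z Y = sfmul N (alphaIf N b Y) Z.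
Proof. intros H SY SZ. rewrite (mul_comm_S N b (alphaIf N b Y) Z); auto.
  - rewrite alphaIf_alphaIf, xorb_nilpotent. reflexivity.
  - apply Sup_alphaIf; auto. Qed.

Lemma hom_dd_X k j : Homog N (xorb (par m k) (xorb (par m j) xp)) (dd m k (X j)).
Proof. apply (hom_dd m N); [reg_tac|apply HXh]. Qed.
Lemma hom_dd_dd_X k j i : Homog N (xorb (par m k) (xorb (par m j) (xorb (par m i) xp))) (dd m k (dd m j (X i))).
Proof. apply (hom_dd m N). reg_tac. apply hom_dd_X. Qed.

Definition jac_first (j k : nat) : SF :=
  sfscal (-(sgn (par m j) * ksign k))
    (alphaIf N (par m j) (sfmul N (dd m j (alphaIf N xp (S k))) (dd m k (X j)))).
Definition jac_second (j k : nat) : SF :=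
  sfscal (-(sgn (par m j) * ksign k))
    (alphaIf N (par m j) (sfmul N (alphaIf N (par m j) (alphaIf N xp (S k))) (dd m j (dd m k (X j))))).

Lemma jac_first_sum :
  sfsum (m+N) (fun j => sfsum (m+N) (jac_first j)) = sfscal (-1) termMix.
Proof. unfold termMix. rewrite (sfsum_swap (m+N) (m+N)), <- (sfsum_scal (m+N)).
  apply sfsum_ext. intros j _. rewrite <- (sfsum_scal (m+N)). apply sfsum_ext. intros k _.
  unfold jac_first. rewrite (mul_comm_homog _ _ _ (hom_dd_X j k)) by sup_tac.
  rewrite (dd_alphaIf m N) by reg_tac.
  rewrite !alphaIf_mul by sup_tac. rewrite !(hom_alphaIf N _ _ _ (hom_dd_X j k)).
  rewrite ?alphaIf_scal, ?mul_scal_l, ?mul_scal_r, ?scal_scal, ?alphaIf_alphaIf. unfold ksign.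
  destruct (par m j), (par m k), xp; unfold alphaIf; simpl; rewrite ?alpha_alpha; simpl; f_equal; ring.
Qed.

(* Second derivatives of X assemble into derivatives of div X. *)
Lemma jac_second_sum :
  sfsum (m+N) (fun j => sfsum (m+N) (jac_second j)) = sfscal (-1) anomaly.
Proof. unfold anomaly. rewrite <- (sfsum_scal (m+N)).
  rewrite (sfsum_ext (m+N) (fun k => sfscal (-1) _) (fun k => sfsum (m+N) (fun j =>
     sfscal (- ksign k) (sfmul N (alphaIf N xp (S k)) (dd m k (dd m j (alphaIf N (par m j) (X j)))))))).
  2:{ intros k _. unfold divX. rewrite (dd_sum m N) by (intros; reg_tac). rewrite mul_sum_r, scal_scal.
      rewrite <- (sfsum_scal (m+N)). apply sfsum_ext. intros j _. f_equal. ring. }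
  rewrite (sfsum_swap (m+N) (m+N)). apply sfsum_ext. intros j _. apply sfsum_ext. intros k _.
  unfold jac_second. rewrite alphaIf_mul by sup_tac. rewrite (hom_alphaIf N _ _ _ (hom_dd_dd_X k j k)).
  rewrite (hom_alphaIf N _ _ _ (HXh k)), !(dd_scal m N) by reg_tac.
  rewrite (dd_dd m N j k (X k)) by reg_tac.
  rewrite ?alphaIf_scal, ?mul_scal_l, ?mul_scal_r, ?scal_scal, ?alphaIf_alphaIf. unfold ksign.
  destruct (par m j), (par m k), xp; unfold alphaIf; simpl; rewrite ?alpha_alpha; simpl; f_equal; ring.
Qed.

Lemma divS_jac_part : sfsum (m+N) (fun j => sfscal (sgn (par m j)) (alphaIf N (par m j)
      (dd m j (sfsum (m+N) (fun k => sfscal (- ksign k) (sfmul N (alphaIf N xp (S k)) (dd m k (X j)))))))) =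
  sfscal (-1) (sfadd termMix anomaly).
Proof.
  rewrite (sfsum_ext _ _ (fun j => sfadd (sfsum (m+N) (jac_first j)) (sfsum (m+N) (jac_second j)))).
  - rewrite sfsum_add, jac_first_sum, jac_second_sum, scal_add. reflexivity.
  - intros j _. rewrite <- sfsum_add, (dd_sum m N) by (intros; reg_tac).
    rewrite alphaIf_sum, <- (sfsum_scal (m+N)). apply sfsum_ext. intros k _.
    unfold jac_first, jac_second. rewrite (dd_scal m N), (dd_mul m N) by reg_tac.
    rewrite alphaIf_scal, alphaIf_add, !scal_add, !scal_scal. f_equal; f_equal; ring.
Qed.

Lemma reg1_divS : Reg1 m N (divS m N S).
Proof. unfold divS. reg_tac. Qed.

Lemma divS_LsymH_expand d : divS m N (LsymH m N xp d X S) =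
  sfadd (sfadd (vfapp m N X (divS m N S)) (sfscal d (sfmul N (divX m N X) (divS m N S)))) (sfscal (d - 1) anomaly).
Proof. unfold divS at 1.
  rewrite (sfsum_ext _ _ (fun j => sfadd
     (sfscal (sgn (par m j)) (alphaIf N (par m j) (dd m j (vfapp m N X (S j)))))
     (sfadd (sfscal d (sfscal (sgn (par m j)) (alphaIf N (par m j) (dd m j (sfmul N (alphaIf N xp (S j)) (divX m N X))))))
       (sfscal (sgn (par m j)) (alphaIf N (par m j)
        (dd m j (sfsum (m+N) (fun k => sfscal (- ksign k) (sfmul N (alphaIf N xp (S k)) (dd m k (X j))))))))))).
  2:{ intros j _. rewrite LsymH_eq. rewrite (dd_add m N) by reg_tac. rewrite (dd_add m N) by reg_tac.
      rewrite (dd_scal m N) by reg_tac. rewrite !alphaIf_add, alphaIf_scal, !scal_add, !scal_scal.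
      f_equal. f_equal. f_equal. ring. }
  rewrite !sfsum_add, sfsum_scal, divS_vf_part, divS_div_part, divS_jac_part.
  ext2. unfold sfadd, sfscal. ring. Qed.

Theorem equivariance_defect l mu t :
  LDH m N xp l mu X (Qt m N t S) g =
  sfadd (Qt m N t (LsymH m N xp (mu - l) X S) g) (sfscal (t * (1 - (mu - l)) - l) (sfmul N anomaly g)).
Proof. unfold LDH. unfold Qt at 1 2.
  pose proof reg1_divS as GD.
  rewrite LieF_QAff_expand by reg_tac. rewrite twisted_QAff_expand by reg_tac. rewrite Qt_LsymH_expand, divS_LsymH_expand.
  rewrite !vf_scal by reg_tac. rewrite ?mul_scal_l, ?mul_scal_r, ?mul_add_l.
  rewrite ?mul_scal_l.
  ext2. unfold sfadd, sfscal. ring. Qed.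

End DefectIdentity.

Lemma sfsum_split a b F : sfsum (a + b) F = sfadd (sfsum a F) (sfsum b (fun k => F (a + k)%nat)).
Proof. ext2. unfold sfsum, sfadd. apply Rsum_add_len. Qed.
Lemma sfsum_delta_const n i (c : nat -> R) : (i < n)%nat ->
  sfsum n (fun j => sfscal (c j) (sfconst (if Nat.eqb i j then 1 else 0))) = sfconst (c i).
Proof. intros Hi. ext2. unfold sfsum, sfscal, sfconst. destruct (Nat.eqb x 0).
  - rewrite <- (Rsum_delta' n i c Hi). apply Rsum_ext. intros. destruct (Nat.eqb i k); ring.
  - apply Rsum_zero. intros. destruct (Nat.eqb i k); ring. Qed.
Lemma sfsum_delta_scal n i (c : nat -> R) f : (i < n)%nat ->
  sfsum n (fun k => sfscal (c k) (sfscal (if Nat.eqb k i then 1 else 0) f)) = sfscal (c i) f.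
Proof. intros Hi. ext2. unfold sfsum, sfscal. rewrite <- (Rsum_delta n i (fun k => c k * f x x0) Hi).
  apply Rsum_ext. intros. destruct (Nat.eqb k i); ring. Qed.
Lemma sfsum_scal_var n' (c : nat -> R) f : sfsum n' (fun i => sfscal (c i) f) = sfscal (Rsum n' c) f.
Proof. ext2. unfold sfsum, sfscal. rewrite (Rsum_ext n' _ (fun i => f x x0 * c i)) by (intros; ring).
  rewrite Rsum_scal. ring. Qed.

Lemma Rsum_sgn_par m N : Rsum (m + N) (fun i => sgn (par m i)) = INR m - INR N.
Proof. rewrite Rsum_add_len. rewrite (Rsum_ext m _ (fun _ => 1)), (Rsum_ext N _ (fun _ => -1)).
  - rewrite !Rsum_const. ring.
  - intros k Hk. unfold par. assert (Nat.leb m (m + k) = true) as -> by (apply Nat.leb_le; lia). reflexivity.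
  - intros k Hk. unfold par. assert (Nat.leb m k = false) as -> by (apply Nat.leb_gt; lia). reflexivity. Qed.

Lemma hom_coord m N j : (j < m + N)%nat -> Homog N (par m j) (coord m j).
Proof. intros Hj. unfold Homog. ext2. rename x into K. unfold alpha, coord, sfscal, par.
  destruct (Nat.ltb_spec j m).
  - assert (Nat.leb m j = false) as -> by (apply Nat.leb_gt; lia). simpl.
    destruct (Nat.eqb_spec K 0); [subst; rewrite popc_0; simpl; ring|ring].
  - assert (Nat.leb m j = true) as -> by (apply Nat.leb_le; lia). simpl.
    destruct (Nat.eqb_spec K (2^(j-m))); [subst; rewrite popc_pow2 by lia; simpl; ring|ring]. Qed.

Section Coordinates.
Variables (m N : nat).

Lemma dd_coord_prod c a b : (a < m + N)%nat -> (b < m + N)%nat ->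
  sfsum (m + N) (fun k => sfscal (c k) (dd m k (sfmul N (coord m a) (coord m b)))) =
  sfadd (sfscal (c a) (coord m b)) (sfscal (c b * sgn (par m b && par m a)) (coord m a)).
Proof. intros Ha Hb.
  rewrite (sfsum_ext _ _ (fun k => sfadd (sfscal (c k) (sfscal (if Nat.eqb k a then 1 else 0) (coord m b)))
       (sfscal (c k * sgn (par m k && par m a)) (sfscal (if Nat.eqb k b then 1 else 0) (coord m a))))).
  2:{ intros k _. rewrite (dd_mul m N) by (apply reg2_reg1, reg2_coord; auto).
      rewrite !(dd_coord m N) by auto. rewrite mul_const_l by (apply Sup_coord; auto).
      rewrite (hom_alphaIf N _ _ _ (hom_coord m N a Ha)), mul_scal_l, mul_const_r by (apply Sup_coord; auto).
      rewrite scal_add, !scal_scal. f_equal. }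
  rewrite sfsum_add. f_equal.
  - apply (sfsum_delta_scal (m+N) a c); auto.
  - rewrite (sfsum_delta_scal (m+N) b (fun k => c k * sgn (par m k && par m a))); auto. Qed.

Definition Dconst (c : nat -> R) (f : SF) : SF := sfsum (m + N) (fun k => sfscal (c k) (dd m k f)).
Lemma Dconst_add c f g : Reg1 m N f -> Reg1 m N g -> Dconst c (sfadd f g) = sfadd (Dconst c f) (Dconst c g).
Proof. intros. unfold Dconst. rewrite <- sfsum_add. apply sfsum_ext. intros. rewrite (dd_add m N), scal_add; auto. Qed.
Lemma Dconst_scal c a f : Reg1 m N f -> Dconst c (sfscal a f) = sfscal a (Dconst c f).
Proof. intros. unfold Dconst. rewrite <- sfsum_scal. apply sfsum_ext. intros. rewrite (dd_scal m N), !scal_scal by auto.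
  f_equal. ring. Qed.
Lemma Dconst_sum c n' F : (forall i, (i < n')%nat -> Reg1 m N (F i)) ->
  Dconst c (sfsum n' F) = sfsum n' (fun i => Dconst c (F i)).
Proof. intros. unfold Dconst. rewrite sfsum_swap. apply sfsum_ext. intros. rewrite (dd_sum m N) by auto.
  rewrite <- sfsum_scal. reflexivity. Qed.
Lemma reg1_coord_mul a b : (a < m + N)%nat -> (b < m + N)%nat -> Reg1 m N (sfmul N (coord m a) (coord m b)).
Proof. intros. apply reg1_mul; apply reg2_reg1, reg2_coord; auto. Qed.

(* The linear function y |-> sum_j w_j (-1)^~j y^j = <h, y> of Xh. *)
Definition lin_form (w : nat -> R) : SF := sfsum (m + N) (fun j => sfscal (w j * sgn (par m j)) (coord m j)).
Lemma reg2_lin_form w : Reg2 m N (lin_form w).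
Proof. unfold lin_form. apply reg2_sum. intros. apply reg2_scal, reg2_coord; auto. Qed.
Lemma dd_lin_form w i : (i < m + N)%nat -> dd m i (lin_form w) = sfconst (w i * sgn (par m i)).
Proof. intros Hi. unfold lin_form. rewrite (dd_sum m N) by (intros; apply reg1_scal, reg2_reg1, reg2_coord; auto).
  rewrite (sfsum_ext _ _ (fun j => sfscal (w j * sgn (par m j)) (sfconst (if Nat.eqb i j then 1 else 0)))).
  - apply (sfsum_delta_const (m+N) i (fun j => w j * sgn (par m j))); auto.
  - intros j Hj. rewrite (dd_scal m N), (dd_coord m N) by (auto; apply reg2_reg1, reg2_coord; auto). reflexivity. Qed.
Lemma divX_add (Y Z : VF) : (forall k, (k < m + N)%nat -> Reg1 m N (Y k)) -> (forall k, (k < m + N)%nat -> Reg1 m N (Z k)) ->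
  divX m N (fun k => sfadd (Y k) (Z k)) = sfadd (divX m N Y) (divX m N Z).
Proof. intros HY HZ. unfold divX. rewrite <- sfsum_add. apply sfsum_ext. intros i Hi.
  rewrite alphaIf_add, (dd_add m N); auto; apply reg1_alphaIf; auto. Qed.

Definition IsConst (f : SF) : Prop := Reg1 m N f /\ forall k, dd m k f = zero.
Lemma const_const c : IsConst (sfconst c).
Proof. split. apply reg1_const. intros. apply dd_const. Qed.
Lemma const_scal c f : IsConst f -> IsConst (sfscal c f).
Proof. intros [G H]. split. apply reg1_scal; auto. intros. rewrite (dd_scal m N), H by auto. apply scal_zero. Qed.
Lemma const_sum n' F : (forall i, (i < n')%nat -> IsConst (F i)) -> IsConst (sfsum n' F).
Proof. intros H. split. apply reg1_sum. intros; apply H; auto.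
  intros k. rewrite (dd_sum m N) by (intros; apply H; auto). rewrite (sfsum_ext _ _ (fun _ => zero)).
  apply sfsum_zero. intros. apply H; auto. Qed.

Lemma divX_const (v : nat -> R) : divX m N (fun k => sfconst (v k)) = zero.
Proof. unfold divX. rewrite (sfsum_ext _ _ (fun _ => zero)); [apply sfsum_zero|]. intros i _.
  destruct (par m i); simpl; [rewrite alpha_const|]; apply dd_const. Qed.

End Coordinates.

Section Osp.
Variables (p q r : nat).
Let m := (p + q)%nat.
Let N := (2 * r)%nat.

Lemma F0_eq : F0 p q r = sfadd (sfsum p (fun i => sfmul N (coord m i) (coord m i)))
  (sfadd (sfscal (-1) (sfsum q (fun i => sfmul N (coord m (p+i)) (coord m (p+i)))))
         (sfscal 2 (sfsum r (fun a => sfmul N (coord m (m+a)) (coord m (m+a+r)))))).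
Proof. reflexivity. Qed.
Lemma Dconst_F0 c : Dconst m N c (F0 p q r) =
  sfadd (sfadd (sfsum p (fun i => sfscal (2 * c i) (coord m i)))
               (sfsum q (fun i => sfscal (-2 * c (p+i)%nat) (coord m (p+i)))))
        (sfsum r (fun a => sfadd (sfscal (2 * c (m+a)%nat) (coord m (m+a+r)))
                                 (sfscal (-2 * c (m+a+r)%nat) (coord m (m+a))))).
Proof.
  assert (Hn : (m + N = p + q + r + r)%nat) by (unfold m, N; lia).
  rewrite F0_eq. rewrite !Dconst_add, !Dconst_scal, !Dconst_sum.
  all: try (intros; apply reg1_coord_mul; lia).
  all: try (apply reg1_sum; intros; apply reg1_coord_mul; lia).
  all: try (apply reg1_scal, reg1_sum; intros; apply reg1_coord_mul; lia).
  all: try (apply reg1_add; apply reg1_scal, reg1_sum; intros; apply reg1_coord_mul; lia).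
  rewrite <- add_assoc. f_equal. f_equal.
  - apply sfsum_ext. intros i Hi. unfold Dconst. rewrite dd_coord_prod by lia.
    assert (par m i = false) as -> by (unfold par; apply Nat.leb_gt; lia). simpl.
    ext2. unfold sfadd, sfscal. ring.
  - rewrite <- sfsum_scal. apply sfsum_ext. intros i Hi. unfold Dconst. rewrite dd_coord_prod by lia.
    assert (par m (p+i) = false) as -> by (unfold par; apply Nat.leb_gt; unfold m; lia). simpl.
    ext2. unfold sfadd, sfscal. ring.
  - rewrite <- sfsum_scal. apply sfsum_ext. intros a Ha. unfold Dconst. rewrite dd_coord_prod by lia.
    assert (par m (m+a) = true) as -> by (unfold par; apply Nat.leb_le; lia).
    assert (par m (m+a+r) = true) as -> by (unfold par; apply Nat.leb_le; lia). simpl.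
    ext2. unfold sfadd, sfscal. ring. Qed.

Definition lin_form_split (w : nat -> R) : SF := sfadd (sfadd (sfsum p (fun i => sfscal (w i) (coord m i)))
     (sfsum q (fun i => sfscal (w (p+i)%nat) (coord m (p+i)))))
     (sfsum r (fun a => sfadd (sfscal (- w (m+a)%nat) (coord m (m+a))) (sfscal (- w (m+a+r)%nat) (coord m (m+a+r))))).
Lemma lin_form_splitE w : lin_form m N w = lin_form_split w.
Proof. unfold lin_form, lin_form_split. replace (m + N)%nat with (p + q + r + r)%nat by (unfold m, N; lia).
  rewrite !sfsum_split, add_assoc. f_equal. f_equal.
  - apply sfsum_ext. intros i Hi. assert (par m i = false) as -> by (unfold par; apply Nat.leb_gt; unfold m; lia).
    simpl. rewrite Rmult_1_r. reflexivity.
  - apply sfsum_ext. intros i Hi. assert (par m (p+i) = false) as -> by (unfold par; apply Nat.leb_gt; unfold m; lia).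
    simpl. rewrite Rmult_1_r. reflexivity.
  - rewrite <- sfsum_add. apply sfsum_ext. intros a Ha.
    replace (p + q + a)%nat with (m + a)%nat by (unfold m; lia).
    replace (p + q + r + a)%nat with (m + a + r)%nat by (unfold m; lia).
    assert (par m (m+a) = true) as -> by (unfold par; apply Nat.leb_le; lia).
    assert (par m (m+a+r) = true) as -> by (unfold par; apply Nat.leb_le; lia). simpl.
    f_equal; f_equal; ring. Qed.

(* The raising map sharp = inverse of v |-> omega_0(v, .), block by block. *)
Ltac bcase := repeat (match goal with
  | |- context [Nat.ltb ?a ?b] => destruct (Nat.ltb_spec a b)
  | |- context [Nat.eqb ?a ?b] => destruct (Nat.eqb_spec a b) end); try (exfalso; lia); try ring.
Lemma sharp_gen w i t (val : R) : (t < m + N)%nat ->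
  (forall l, (l < m + N)%nat -> G0inv p q r i l * w l = if Nat.eqb l t then val else 0) ->
  sharp p q r w i = val.
Proof. intros Ht H. unfold sharp. simpl. rewrite (Rsum_ext _ _ (fun l => if Nat.eqb l t then val else 0)).
  - apply (Rsum_delta _ _ (fun _ => val)). exact Ht.
  - intros. apply H. exact H0. Qed.
Lemma sharp_lo w i : (i < p)%nat -> sharp p q r w i = w i.
Proof. intros Hi. apply (sharp_gen w i i). unfold m, N; lia.
  intros l Hl. unfold G0inv, G0. simpl. bcase. subst. ring. Qed.
Lemma sharp_mid w i : (p <= i < m)%nat -> sharp p q r w i = - w i.
Proof. intros Hi. unfold m in Hi. apply (sharp_gen w i i). unfold m, N; lia.
  intros l Hl. unfold G0inv, G0. simpl. bcase. subst. ring. Qed.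
Lemma sharp_o1 w a : (a < r)%nat -> sharp p q r w (m + a)%nat = - w (m + a + r)%nat.
Proof. intros Ha. unfold m. apply (sharp_gen w _ (p + q + a + r)). unfold m, N; lia.
  intros l Hl. unfold G0inv, G0. simpl. bcase. subst. ring. Qed.
Lemma sharp_o2 w a : (a < r)%nat -> sharp p q r w (m + a + r)%nat = w (m + a)%nat.
Proof. intros Ha. unfold m. apply (sharp_gen w _ (p + q + a)). unfold m, N; lia.
  intros l Hl. unfold G0inv, G0. simpl. bcase. subst. ring. Qed.

Lemma Dconst_sharp_F0 w : Dconst m N (sharp p q r w) (F0 p q r) = sfscal 2 (lin_form_split w).
Proof. rewrite Dconst_F0. unfold lin_form_split. rewrite !scal_add, <- !sfsum_scal. f_equal; [f_equal|].
  - apply sfsum_ext. intros i Hi. rewrite sharp_lo, scal_scal by auto. reflexivity.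
  - apply sfsum_ext. intros i Hi. rewrite sharp_mid by (unfold m; lia). rewrite scal_scal. f_equal. ring.
  - apply sfsum_ext. intros a Ha. rewrite sharp_o1, sharp_o2, scal_add, !scal_scal by auto.
    rewrite add_comm. f_equal; f_equal; ring. Qed.
Lemma reg2_F0 : Reg2 m N (F0 p q r).
Proof. rewrite F0_eq. apply reg2_add; [|apply reg2_add]; [| apply reg2_scal | apply reg2_scal]; apply reg2_sum; intros;
  apply reg2_mul; apply reg2_coord; unfold m, N in *; lia. Qed.
Lemma homF0 : Homog N false (F0 p q r).
Proof. rewrite F0_eq. apply hom_add; [|apply hom_add]; [| apply hom_scal | apply hom_scal]; apply hom_sum; intros.
  - eapply hom_ext; [|apply hom_mul; [apply Sup_coord| apply hom_coord | apply hom_coord]]; try (unfold m, N in *; lia).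
    destruct (par m k); reflexivity.
  - eapply hom_ext; [|apply hom_mul; [apply Sup_coord| apply hom_coord | apply hom_coord]]; try (unfold m, N in *; lia).
    destruct (par m (p+k)); reflexivity.
  - eapply hom_ext; [|apply hom_mul; [apply Sup_coord| apply hom_coord | apply hom_coord]]; try (unfold m, N in *; lia).
    assert (par m (m+k) = true) as -> by (unfold par; apply Nat.leb_le; lia).
    assert (par m (m+k+r) = true) as -> by (unfold par; apply Nat.leb_le; lia). reflexivity. Qed.

Lemma X1_expand w i :
  X1 p q r w i = sfadd (sfmul N (lin_form m N w) (coord m i)) (sfscal (/2) (sfscal (- sharp p q r w i) (F0 p q r))).
Proof. unfold X1. simpl. f_equal. f_equal. unfold Xm1. apply mul_const_r. apply (reg2_reg1 m N), reg2_F0. Qed.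

Ltac reg_coord := repeat first [ apply reg1_mul | apply reg1_scal | apply reg1_alphaIf
  | apply reg2_reg1; auto | apply reg2_coord; auto ].

Lemma divX_X1_term w i : (i < m + N)%nat ->
  dd m i (alphaIf N (par m i) (X1 p q r w i)) =
  sfadd (sfadd (sfscal (w i * sgn (par m i)) (coord m i)) (sfscal (sgn (par m i)) (lin_form m N w)))
        (sfscal (-/2) (sfscal (sharp p q r w i) (dd m i (F0 p q r)))).
Proof. intros Hi. assert (GE := reg2_lin_form m N w). assert (GF := reg2_F0).
  rewrite X1_expand, alphaIf_add, alphaIf_mul by (apply Sup_coord; auto).
  rewrite (hom_alphaIf N _ _ _ (hom_coord m N i Hi)), !alphaIf_scal, (hom_alphaIf N _ _ _ homF0).
  rewrite andb_false_r. simpl sgn. rewrite scal_1.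
  rewrite (dd_add m N), (dd_mul m N), !(dd_scal m N) by reg_coord.
  rewrite (dd_alphaIf m N) by (apply reg2_reg1; auto). rewrite dd_lin_form, (dd_coord m N), Nat.eqb_refl by auto.
  rewrite alphaIf_alphaIf, xorb_nilpotent, alphaIf_false.
  assert (alphaIf N (par m i) (sfconst (w i * sgn (par m i))) = sfconst (w i * sgn (par m i))) as ->
    by (destruct (par m i); simpl; [apply alpha_const|reflexivity]).
  rewrite mul_scal_l, mul_scal_r, mul_const_l, mul_scal_r, mul_const_r
    by (try apply Sup_coord; try apply (reg2_reg1 m N); auto).
  rewrite !scal_scal, andb_diag. f_equal; [f_equal|]; f_equal. all: try (destruct (par m i); simpl; ring).
Qed.

(* Summing the terms: d_i y^i contributes <h, y>, the Euler part
   (m - N) <h, y> and the F_0 part -<h, y>, so div X^h = (p + q - 2r) <h, y>. *)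
Lemma divX_X1 w : divX m N (X1 p q r w) = sfscal (INR m - INR N) (lin_form m N w).
Proof. unfold divX. rewrite (sfsum_ext _ _ _ (divX_X1_term w)).
  rewrite !sfsum_add, sfsum_scal_var, Rsum_sgn_par, sfsum_scal.
  fold (Dconst m N (sharp p q r w) (F0 p q r)). rewrite Dconst_sharp_F0, <- lin_form_splitE. fold (lin_form m N w).
  ext2. unfold sfadd, sfscal. field. Qed.

(* For h in g_0, X^h is linear, hence has constant divergence (for every
   matrix A, in or out of g_0). *)
Lemma const_div_X0 A : IsConst m N (divX m N (X0 p q r A)).
Proof. unfold divX. apply const_sum. intros i Hi. unfold X0. simpl. fold m. fold N.
  rewrite alphaIf_sum. rewrite (dd_sum m N) by (intros; apply reg1_alphaIf, reg1_scal, reg2_reg1, reg2_coord; auto).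
  apply const_sum. intros j Hj. rewrite alphaIf_scal, (hom_alphaIf N _ _ _ (hom_coord m N j Hj)).
  rewrite !(dd_scal m N) by (try apply reg1_scal; apply reg2_reg1, reg2_coord; auto). rewrite (dd_coord m N) by auto.
  apply const_scal, const_scal, const_const. Qed.

Lemma reg2_X0 A k : (k < m + N)%nat -> Reg2 m N (X0 p q r A k).
Proof. intros. unfold X0. simpl. apply reg2_sum. intros. apply reg2_scal, reg2_coord; auto. Qed.

Lemma reg2_X1 w k : (k < m + N)%nat -> Reg2 m N (X1 p q r w k).
Proof. intros. rewrite X1_expand. apply reg2_add.
  - apply reg2_mul; [apply reg2_lin_form|apply reg2_coord; auto].
  - apply reg2_scal, reg2_scal, reg2_F0. Qed.

Lemma reg2_Xh v A w k : (k < m + N)%nat -> Reg2 m N (Xh p q r v A w k).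
Proof. intros Hk. unfold Xh. apply reg2_add; [apply reg2_const|apply reg2_add].
  - apply reg2_X0; auto.
  - apply reg2_X1; auto. Qed.

Lemma divX_Xh v A w : divX m N (Xh p q r v A w) =
  sfadd (divX m N (X0 p q r A)) (sfscal (INR m - INR N) (lin_form m N w)).
Proof. unfold Xh. rewrite !divX_add, divX_X1.
  - unfold Xm1. rewrite divX_const, add_zero_l. reflexivity.
  - intros. apply reg2_reg1, reg2_X0; auto.
  - intros. apply reg2_reg1, reg2_X1; auto.
  - intros. apply reg1_const.
  - intros. apply reg1_add; apply reg2_reg1; [apply reg2_X0|apply reg2_X1]; auto. Qed.

Lemma dd_divX_Xh v A w k : (p + q = 2 * r)%nat -> dd m k (divX m N (Xh p q r v A w)) = zero.
Proof. intros hd. rewrite divX_Xh.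
  assert (INR m - INR N = 0) as -> by (unfold m, N; rewrite hd; ring).
  rewrite scal_0, add_zero_r. apply (const_div_X0 A). Qed.

End Osp.

Module SchwarzTheorem.
Import Coquelicot.Coquelicot.

Lemma Derive_of_lim f x l : derivable_pt_lim f x l -> Derive f x = l.
Proof. intros H. apply is_derive_unique. apply is_derive_Reals. exact H. Qed.
Lemma ex_derive_of_lim f x l : derivable_pt_lim f x l -> ex_derive f x.
Proof. intros H. exists l. apply is_derive_Reals. exact H. Qed.

Lemma upd_eq x i s : upd x i s i = s.
Proof. unfold upd. rewrite Nat.eqb_refl. reflexivity. Qed.
Lemma upd_neq x i s j : j <> i -> upd x i s j = x j.
Proof. intros. unfold upd. destruct (Nat.eqb_spec j i); [lia|reflexivity]. Qed.
Lemma upd_upd_same x j v t : upd (upd x j v) j t = upd x j t.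
Proof. apply functional_extensionality. intro k. unfold upd. destruct (Nat.eqb k j); reflexivity. Qed.
Lemma upd_comm x i j a b : i <> j -> upd (upd x i a) j b = upd (upd x j b) i a.
Proof. intros. apply functional_extensionality. intro k. unfold upd.
  destruct (Nat.eqb_spec k j), (Nat.eqb_spec k i); subst; auto; lia. Qed.

(* Restriction to the coordinate plane (x^i, x^j) through x: the partial
   derivatives of F become derivatives of one-variable restrictions. *)
Section Plane.
Variables (x : pt) (i j : nat).
Hypothesis Hij : i <> j.

Lemma lim_along_i F u v : (forall y, HasD i F y (pd i F y)) ->
  derivable_pt_lim (fun z => F (upd (upd x i z) j v)) u (pd i F (upd (upd x i u) j v)).
Proof. intros HF. pose proof (HF (upd (upd x i u) j v)) as H. unfold HasD in H.
  rewrite upd_neq, upd_eq in H by auto.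
  replace (fun z => F (upd (upd x i z) j v)) with (fun s => F (upd (upd (upd x i u) j v) i s)); [exact H|].
  apply functional_extensionality; intro s. rewrite <- upd_comm, upd_upd_same by auto. reflexivity. Qed.

Lemma lim_along_j F u v : (forall y, HasD j F y (pd j F y)) ->
  derivable_pt_lim (fun z => F (upd (upd x i u) j z)) v (pd j F (upd (upd x i u) j v)).
Proof. intros HF. pose proof (HF (upd (upd x i u) j v)) as H. unfold HasD in H. rewrite upd_eq in H.
  replace (fun z => F (upd (upd x i u) j z)) with (fun s => F (upd (upd (upd x i u) j v) j s)); [exact H|].
  apply functional_extensionality; intro s. rewrite upd_upd_same. reflexivity. Qed.

Lemma cont_plane m F : (i < m)%nat -> (j < m)%nat -> cont_at m F x ->
  continuity_2d_pt (fun u v => F (upd (upd x i u) j v)) (x i) (x j).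
Proof. intros Hi Hj Hc eps. destruct (Hc eps (cond_pos eps)) as [del [Hdel Hc']].
  exists (mkposreal del Hdel). intros u v Hu Hv. simpl in Hu, Hv.
  assert (upd (upd x i (x i)) j (x j) = x) as -> by (unfold upd; apply functional_extensionality;
    intro k; destruct (Nat.eqb_spec k j), (Nat.eqb_spec k i); subst; auto).
  apply Hc'. intros k Hk. unfold upd. destruct (Nat.eqb_spec k j); [subst; auto|].
  destruct (Nat.eqb_spec k i); [subst; auto|]. rewrite Rminus_eq_0, Rabs_R0. auto. Qed.

End Plane.

Section Schwarz.
Variables (m : nat) (h : pt -> R).
Hypothesis Hs : Smooth m h.

Lemma smooth_pd i y : (i < m)%nat -> HasD i h y (pd i h y).
Proof. intros Hi. destruct (Hs nil (Forall_nil _)) as [_ H]. destruct (H i y Hi) as [l Hl].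
  rewrite (pd_spec i h y l Hl). exact Hl. Qed.
Lemma smooth_pd2 i j y : (i < m)%nat -> (j < m)%nat -> HasD i (pd j h) y (pd i (pd j h) y).
Proof. intros Hi Hj. assert (HFF : List.Forall (fun i => (i < m)%nat) (j :: nil)) by (repeat constructor; auto).
  destruct (Hs (j :: nil) HFF) as [_ H].
  destruct (H i y Hi) as [l Hl]. simpl in Hl. rewrite (pd_spec i (pd j h) y l Hl). exact Hl. Qed.
Lemma smooth_pd2_cont i j y : (i < m)%nat -> (j < m)%nat -> cont_at m (pd i (pd j h)) y.
Proof. intros Hi Hj. assert (HFF : List.Forall (fun i => (i < m)%nat) (i :: j :: nil)) by (repeat constructor; auto).
  destruct (Hs (i :: j :: nil) HFF) as [H _].
  apply H. Qed.

Lemma schwarz i j x : (i < m)%nat -> (j < m)%nat -> pd i (pd j h) x = pd j (pd i h) x.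
Proof. intros Hi Hj. destruct (Nat.eq_dec i j) as [->|Hij]; [reflexivity|].
  set (phi := fun u v => h (upd (upd x i u) j v)).
  assert (Lj : forall u v, derivable_pt_lim (fun t => phi u t) v (pd j h (upd (upd x i u) j v)))
    by (intros; apply lim_along_j; intros; apply smooth_pd; auto).
  assert (Li : forall u v, derivable_pt_lim (fun z => phi z v) u (pd i h (upd (upd x i u) j v)))
    by (intros; apply lim_along_i; auto; intros; apply smooth_pd; auto).
  assert (Dj : forall v, (fun z => Derive (fun t => phi z t) v)
                         = (fun z => pd j h (upd (upd x i z) j v)))
    by (intros; apply functional_extensionality; intro; apply Derive_of_lim, Lj).
  assert (Di : forall u, (fun z => Derive (fun t => phi t z) u)
                         = (fun z => pd i h (upd (upd x i u) j z)))
    by (intros; apply functional_extensionality; intro; apply Derive_of_lim, Li).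
  assert (Lij : forall u v, derivable_pt_lim (fun z => pd j h (upd (upd x i z) j v)) u
                              (pd i (pd j h) (upd (upd x i u) j v)))
    by (intros; apply lim_along_i; auto; intros; apply smooth_pd2; auto).
  assert (Lji : forall u v, derivable_pt_lim (fun z => pd i h (upd (upd x i u) j z)) v
                              (pd j (pd i h) (upd (upd x i u) j v)))
    by (intros; apply lim_along_j; intros; apply smooth_pd2; auto).
  pose proof (Schwarz phi (x i) (x j)) as SW.
  rewrite Dj, Di, (Derive_of_lim _ _ _ (Lij _ _)), (Derive_of_lim _ _ _ (Lji _ _)) in SW.
  assert (upd (upd x i (x i)) j (x j) = x) as Hx by (rewrite !upd_same; reflexivity).
  rewrite Hx in SW. apply SW.
  - exists (mkposreal 1 Rlt_0_1). intros u v _ _. rewrite Dj, Di.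
    repeat split; eapply ex_derive_of_lim; eauto.
  - apply (continuity_2d_pt_ext
      (fun u v => pd i (pd j h) (upd (upd x i u) j v))).
    + intros u v. rewrite Dj. symmetry. apply Derive_of_lim, Lij.
    + apply (cont_plane x i j Hij m); auto using smooth_pd2_cont.
  - apply (continuity_2d_pt_ext
      (fun u v => pd j (pd i h) (upd (upd x i u) j v))).
    + intros u v. rewrite Di. symmetry. apply Derive_of_lim, Lji.
    + apply (cont_plane x i j Hij m); auto using smooth_pd2_cont.
Qed.

End Schwarz.
End SchwarzTheorem.

(* Truncation to the 2^N genuine components.  An IsSF superfunction becomes
   Reg2 (Schwarz), without changing its components K < 2^N. *)

Definition trunc (N : nat) (f : SF) : SF := fun K x => if Nat.ltb K (2 ^ N) then f K x else 0.

Lemma trunc_eqN N f : eqN N (trunc N f) f.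
Proof. intros K x HK. unfold trunc. apply Nat.ltb_lt in HK. rewrite HK. reflexivity. Qed.

Lemma pd_zero i : pd i (fun _ : pt => 0) = fun _ => 0.
Proof. apply functional_extensionality. intro. apply pd_const. Qed.

Lemma reg2_of_IsSF m N f : IsSF m f -> Reg2 m N (trunc N f).
Proof. intros H.
  assert (D0 : forall K, D1 m (trunc N f K)).
  { intros K. unfold trunc. destruct (Nat.ltb K (2^N)).
    - intros i x Hi. apply (SchwarzTheorem.smooth_pd m); auto. apply H.
    - apply D1_const. }
  apply (reg2_intro m N).
  - split.
    + intros K x HK. unfold trunc. destruct (Nat.ltb_spec K (2^N)); [lia|reflexivity].
    + exact D0.
  - intros i Hi K. unfold dEv, trunc. destruct (Nat.ltb K (2^N)).
    + intros j x Hj. apply (SchwarzTheorem.smooth_pd2 m); auto. apply H.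
    + rewrite pd_zero. apply D1_const.
  - intros i j Hi Hj. ext2. unfold dEv, trunc. destruct (Nat.ltb x (2^N)).
    + apply (SchwarzTheorem.schwarz m); auto. apply H.
    + rewrite !pd_zero. reflexivity. Qed.

Definition truncF (n : nat) (F : nat -> SF) : nat -> SF :=
  fun k => if Nat.ltb k n then F k else zero.

Lemma truncF_eq n F k : (k < n)%nat -> truncF n F k = F k.
Proof. intros Hk. unfold truncF. apply Nat.ltb_lt in Hk. rewrite Hk. reflexivity. Qed.

Lemma reg2_truncF m N n F : (forall k, (k < n)%nat -> Reg2 m N (F k)) -> forall k, Reg2 m N (truncF n F k).
Proof. intros H k. unfold truncF. destruct (Nat.ltb_spec k n); [apply H; auto|apply reg2_zero]. Qed.

Section Locality.
Variables (m N : nat).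

Lemma eqN_dd k f f' : (k < m + N)%nat -> eqN N f f' -> eqN N (dd m k f) (dd m k f').
Proof. intros Hk H. unfold dd. destruct (Nat.ltb_spec k m).
  - intros K x HK. unfold dEv. f_equal. apply functional_extensionality. intro y. apply H; auto.
  - apply dOd_eqN; auto. lia. Qed.
Lemma eqN_sum n' F G : (forall k, (k < n')%nat -> eqN N (F k) (G k)) -> eqN N (sfsum n' F) (sfsum n' G).
Proof. intros H K x HK. unfold sfsum. apply Rsum_ext. intros. apply H; auto. Qed.

Lemma eqN_vf X f f' : eqN N f f' -> eqN N (vfapp m N X f) (vfapp m N X f').
Proof. intros H. unfold vfapp. apply eqN_sum. intros k Hk. rewrite (eqN_dd k f f' Hk H). reflexivity. Qed.
Lemma eqN_LieF l X f f' : eqN N f f' -> eqN N (LieF m N l X f) (LieF m N l X f').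
Proof. intros H. unfold LieF. rewrite (eqN_vf X f f' H), H. reflexivity. Qed.
Lemma eqN_divS S S' : (forall k, (k < m + N)%nat -> eqN N (S k) (S' k)) -> eqN N (divS m N S) (divS m N S').
Proof. intros H. unfold divS. apply eqN_sum. intros k Hk. rewrite (eqN_dd k _ _ Hk (H k Hk)). reflexivity. Qed.
Lemma eqN_QAff S S' S0 S0' f f' : (forall k, (k < m + N)%nat -> eqN N (S k) (S' k)) -> eqN N S0 S0' -> eqN N f f' ->
  eqN N (QAff m N S S0 f) (QAff m N S' S0' f').
Proof. intros H H0 Hf. unfold QAff. rewrite H0, Hf. apply sfadd_proper; [|reflexivity].
  apply eqN_sum. intros k Hk. rewrite (H k Hk), (eqN_dd k _ _ Hk Hf). reflexivity. Qed.
Lemma eqN_Qt t S S' f f' : (forall k, (k < m + N)%nat -> eqN N (S k) (S' k)) -> eqN N f f' ->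
  eqN N (Qt m N t S f) (Qt m N t S' f').
Proof. intros H Hf. unfold Qt. apply eqN_QAff; auto. rewrite (eqN_divS S S' H). reflexivity. Qed.
Lemma eqN_LDH xp l mu X t S S' f f' : (forall k, (k < m + N)%nat -> eqN N (S k) (S' k)) -> eqN N f f' ->
  eqN N (LDH m N xp l mu X (Qt m N t S) f) (LDH m N xp l mu X (Qt m N t S') f').
Proof. intros H Hf. unfold LDH. apply sfadd_proper.
  - apply eqN_LieF, eqN_Qt; auto.
  - apply sfscal_proper, alphaIf_proper, eqN_Qt; auto. rewrite (eqN_LieF l X f f' Hf). reflexivity. Qed.
Lemma eqN_LD l mu X t S S' f f' : (forall k, (k < m + N)%nat -> eqN N (S k) (S' k)) -> eqN N f f' ->
  eqN N (LD m N l mu X (Qt m N t S) f) (LD m N l mu X (Qt m N t S') f').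
Proof. intros H Hf. unfold LD. apply sfadd_proper; apply eqN_LDH; auto. Qed.
Lemma eqN_LsymH xp d X S S' j : (forall k, (k < m + N)%nat -> eqN N (S k) (S' k)) -> (j < m + N)%nat ->
  eqN N (LsymH m N xp d X S j) (LsymH m N xp d X S' j).
Proof. intros H Hj. unfold LsymH. rewrite (eqN_vf X _ _ (H j Hj)). apply sfadd_proper; [reflexivity|].
  apply sfadd_proper.
  - apply sfscal_proper, eqN_sum. intros i Hi. rewrite (H j Hj). reflexivity.
  - apply eqN_sum. intros k Hk. rewrite (H k Hk). reflexivity. Qed.
Lemma eqN_Lsym d X S S' j : (forall k, (k < m + N)%nat -> eqN N (S k) (S' k)) -> (j < m + N)%nat ->
  eqN N (Lsym m N d X S j) (Lsym m N d X S' j).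
Proof. intros H Hj. unfold Lsym. apply sfadd_proper; apply eqN_LsymH; auto. Qed.

Lemma vf_extX X X' f : (forall k, (k < m + N)%nat -> X k = X' k) -> vfapp m N X f = vfapp m N X' f.
Proof. intros H. unfold vfapp. apply sfsum_ext. intros. rewrite H; auto. Qed.
Lemma div_extX X X' : (forall k, (k < m + N)%nat -> X k = X' k) -> divX m N X = divX m N X'.
Proof. intros H. unfold divX. apply sfsum_ext. intros. rewrite H; auto. Qed.
Lemma LDH_extX xp l mu X X' D f : (forall k, (k < m + N)%nat -> X k = X' k) ->
  LDH m N xp l mu X D f = LDH m N xp l mu X' D f.
Proof. intros H. unfold LDH, LieF. rewrite !(vf_extX X X'), (div_extX X X') by auto. reflexivity. Qed.
Lemma evVF_ext X X' k : X k = X' k -> evVF m N X k = evVF m N X' k.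
Proof. intros H. unfold evVF. rewrite H. reflexivity. Qed.
Lemma odVF_ext X X' k : X k = X' k -> odVF m N X k = odVF m N X' k.
Proof. intros H. unfold odVF. rewrite H. reflexivity. Qed.
Lemma LD_extX l mu X X' D f : (forall k, (k < m + N)%nat -> X k = X' k) ->
  LD m N l mu X D f = LD m N l mu X' D f.
Proof. intros H. unfold LD.
  rewrite (LDH_extX false l mu (evVF m N X) (evVF m N X')), (LDH_extX true l mu (odVF m N X) (odVF m N X')).
  reflexivity. all: intros; auto using evVF_ext, odVF_ext. Qed.
Lemma LsymH_extX xp d X X' S j : (forall k, (k < m + N)%nat -> X k = X' k) -> (j < m + N)%nat ->
  LsymH m N xp d X S j = LsymH m N xp d X' S j.
Proof. intros H Hj. unfold LsymH, Jm. rewrite (vf_extX X X') by auto. f_equal. f_equal.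
  - f_equal. apply sfsum_ext. intros. rewrite H; auto.
  - apply sfsum_ext. intros. rewrite H; auto. Qed.
Lemma Qt_extS t S S' : (forall k, (k < m + N)%nat -> S k = S' k) -> Qt m N t S = Qt m N t S'.
Proof. intros H. unfold Qt, QAff. apply functional_extensionality. intro f.
  assert (divS m N S = divS m N S') as ->. { unfold divS. apply sfsum_ext. intros. rewrite H; auto. }
  f_equal. apply sfsum_ext. intros. rewrite H; auto. Qed.
Lemma Lsym_extX d X X' S j : (forall k, (k < m + N)%nat -> X k = X' k) -> (j < m + N)%nat ->
  Lsym m N d X S j = Lsym m N d X' S j.
Proof. intros H Hj. unfold Lsym.
  rewrite (LsymH_extX false d (evVF m N X) (evVF m N X')), (LsymH_extX true d (odVF m N X) (odVF m N X')).
  reflexivity. all: intros; auto using evVF_ext, odVF_ext. Qed.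

End Locality.

Lemma pow_m1_even k : Nat.even k = true -> (-1) ^ k = 1.
Proof. intros H. apply Nat.even_spec in H. destruct H as [j ->]. apply pow_1_even. Qed.
Lemma pow_m1_odd k : Nat.even k = false -> (-1) ^ k = -1.
Proof. intros H. assert (Nat.odd k = true) by (unfold Nat.odd; rewrite H; reflexivity).
  apply Nat.odd_spec in H0. destruct H0 as [j ->]. rewrite Nat.add_1_r. apply pow_1_odd. Qed.

Lemma evpart_eq N f : evpart N f = sfscal (/2) (sfadd f (alpha N f)).
Proof. ext2. unfold evpart, sfscal, sfadd, alpha. destruct (Nat.even (popc N x)) eqn:E.
  - rewrite pow_m1_even by auto. field. - rewrite pow_m1_odd by auto. field. Qed.
Lemma oddpart_eq N f : oddpart N f = sfscal (/2) (sfadd f (sfscal (-1) (alpha N f))).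
Proof. ext2. unfold oddpart, sfscal, sfadd, alpha. destruct (Nat.even (popc N x)) eqn:E.
  - rewrite pow_m1_even by auto. field. - rewrite pow_m1_odd by auto. field. Qed.

Section Parts.
Variables (m N : nat).

Lemma reg2_evpart f : Reg2 m N f -> Reg2 m N (evpart N f).
Proof. intros. rewrite evpart_eq. apply reg2_scal, reg2_add, reg2_alpha; auto. Qed.
Lemma reg2_oddpart f : Reg2 m N f -> Reg2 m N (oddpart N f).
Proof. intros. rewrite oddpart_eq. apply reg2_scal, reg2_add, reg2_scal, reg2_alpha; auto. Qed.
Lemma hom_evpart f : Homog N false (evpart N f).
Proof. unfold Homog. rewrite evpart_eq, alpha_scal, alpha_add, alpha_alpha, add_comm. simpl. rewrite scal_1. reflexivity. Qed.
Lemma hom_oddpart f : Homog N true (oddpart N f).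
Proof. unfold Homog. rewrite oddpart_eq, alpha_scal, alpha_add, alpha_scal, alpha_alpha. ext2.
  unfold sfscal, sfadd. simpl. ring. Qed.

Lemma evpart_sum n' F : evpart N (sfsum n' F) = sfsum n' (fun k => evpart N (F k)).
Proof. ext2. unfold evpart, sfsum. destruct (Nat.even _); [reflexivity|]. symmetry; apply Rsum_zero; auto. Qed.
Lemma oddpart_sum n' F : oddpart N (sfsum n' F) = sfsum n' (fun k => oddpart N (F k)).
Proof. ext2. unfold oddpart, sfsum. destruct (Nat.even _); [|reflexivity]. symmetry; apply Rsum_zero; auto. Qed.

Ltac reg1_lin := repeat first [apply reg1_add | apply reg1_scal | apply reg1_alpha | auto].

Lemma divX_ev Y : (forall j, (j < m + N)%nat -> Reg1 m N (Y j)) -> divX m N (evVF m N Y) = evpart N (divX m N Y).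
Proof. intros HY. unfold divX at 2. rewrite evpart_sum. unfold divX. apply sfsum_ext. intros i Hi. unfold evVF.
  pose proof (HY i Hi) as G.
  destruct (par m i) eqn:E; simpl.
  - rewrite oddpart_eq, evpart_eq, alpha_scal, alpha_add, alpha_scal, alpha_alpha.
    rewrite (dd_scal m N), (dd_add m N), (dd_scal m N) by reg1_lin.
    rewrite (dd_alpha m N i (Y i) G), alpha_scal, alpha_alpha, E. ext2. unfold sfscal, sfadd. simpl. ring.
  - rewrite !evpart_eq. rewrite (dd_scal m N), (dd_add m N), (dd_alpha m N), E by reg1_lin.
    simpl. rewrite scal_1. reflexivity. Qed.

Lemma divX_od Y : (forall j, (j < m + N)%nat -> Reg1 m N (Y j)) -> divX m N (odVF m N Y) = oddpart N (divX m N Y).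
Proof. intros HY. unfold divX at 2. rewrite oddpart_sum. unfold divX. apply sfsum_ext. intros i Hi. unfold odVF.
  pose proof (HY i Hi) as G.
  destruct (par m i) eqn:E; simpl.
  - rewrite oddpart_eq, evpart_eq, alpha_scal, alpha_add, alpha_alpha.
    rewrite (dd_scal m N), (dd_add m N) by reg1_lin.
    rewrite (dd_alpha m N i (Y i) G), alpha_scal, alpha_alpha, E. ext2. unfold sfscal, sfadd. simpl. ring.
  - rewrite !oddpart_eq. rewrite (dd_scal m N), (dd_add m N), (dd_scal m N), (dd_alpha m N), E by reg1_lin.
    simpl. rewrite scal_1. reflexivity. Qed.

Lemma dd_evpart_zero k f : Reg1 m N f -> dd m k f = zero -> dd m k (evpart N f) = zero.
Proof. intros G H.
  rewrite evpart_eq, (dd_scal m N), (dd_add m N), (dd_alpha m N), H, alpha_zero, scal_zero, add_zero_l, scal_zero;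
  auto; try apply reg1_add; try apply reg1_alpha; auto. Qed.
Lemma dd_oddpart_zero k f : Reg1 m N f -> dd m k f = zero -> dd m k (oddpart N f) = zero.
Proof. intros G H.
  rewrite oddpart_eq, (dd_scal m N), (dd_add m N), (dd_scal m N), (dd_alpha m N), H, alpha_zero, !scal_zero, add_zero_l, scal_zero;
  auto; try apply reg1_add; try apply reg1_scal; try apply reg1_alpha; auto. Qed.

End Parts.

Lemma Qt_add m N t S1 S2 g :
  (forall j, (j < m + N)%nat -> Reg1 m N (S1 j)) -> (forall j, (j < m + N)%nat -> Reg1 m N (S2 j)) ->
  Qt m N t (fun j => sfadd (S1 j) (S2 j)) g = sfadd (Qt m N t S1 g) (Qt m N t S2 g).
Proof. intros H1 H2. unfold Qt, QAff.
  assert (divS m N (fun j => sfadd (S1 j) (S2 j)) = sfadd (divS m N S1) (divS m N S2)) as ->.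
  { unfold divS. rewrite <- sfsum_add. apply sfsum_ext. intros j Hj.
    rewrite (dd_add m N), alphaIf_add, scal_add by auto. reflexivity. }
  rewrite scal_add, mul_add_l.
  rewrite (sfsum_ext _ _ (fun k => sfadd (sfmul N (S1 k) (dd m k g)) (sfmul N (S2 k) (dd m k g)))).
  2:{ intros. apply mul_add_l. }
  rewrite sfsum_add. ext2. unfold sfadd. ring. Qed.

Lemma reg1_LsymH m N xp d X S j : (forall i, Reg2 m N (X i)) -> (forall k, Reg2 m N (S k)) ->
  Reg1 m N (LsymH m N xp d X S j).
Proof. intros HX HS. unfold LsymH, Jm. apply reg1_add; [apply reg1_vf; auto|]. apply reg1_add.
  - apply reg1_scal, reg1_sum. intros. apply reg1_scal, reg1_mul; [apply reg1_alphaIf, reg2_reg1; auto|].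
    apply reg1_scal, reg1_dd; auto.
  - apply reg1_sum. intros. apply reg1_mul; [apply reg1_alphaIf, reg2_reg1; auto|]. apply reg1_scal, reg1_dd; auto. Qed.

(* Q_t is equivariant with respect to every regular vector field with
   constant divergence: apply the defect identity to its even and odd parts,
   whose anomalies vanish. *)
Section ConstantDivergence.
Variables (m N : nat) (X : VF) (S : Sym1) (g : SF).
Hypothesis HX : forall j, Reg2 m N (X j).
Hypothesis HdivX : forall k, dd m k (divX m N X) = zero.
Hypothesis HS : forall k, Reg2 m N (S k).
Hypothesis Hg : Reg2 m N g.

Lemma reg2_evVF j : Reg2 m N (evVF m N X j).
Proof. unfold evVF. destruct (par m j); [apply reg2_oddpart|apply reg2_evpart]; auto. Qed.
Lemma reg2_odVF j : Reg2 m N (odVF m N X j).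
Proof. unfold odVF. destruct (par m j); [apply reg2_evpart|apply reg2_oddpart]; auto. Qed.
Lemma hom_evVF j : Homog N (xorb (par m j) false) (evVF m N X j).
Proof. unfold evVF. destruct (par m j); simpl; [apply hom_oddpart|apply hom_evpart]. Qed.
Lemma hom_odVF j : Homog N (xorb (par m j) true) (odVF m N X j).
Proof. unfold odVF. destruct (par m j); simpl; [apply hom_evpart|apply hom_oddpart]. Qed.

Lemma anomaly_evVF : anomaly m N (evVF m N X) false S = zero.
Proof. unfold anomaly. rewrite divX_ev by (intros; apply reg2_reg1; auto).
  rewrite (sfsum_ext _ _ (fun _ => zero)); [apply sfsum_zero|]. intros k _.
  rewrite dd_evpart_zero, mul_zero_r, scal_zero by (auto; apply reg1_div; auto). reflexivity. Qed.
Lemma anomaly_odVF : anomaly m N (odVF m N X) true S = zero.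
Proof. unfold anomaly. rewrite divX_od by (intros; apply reg2_reg1; auto).
  rewrite (sfsum_ext _ _ (fun _ => zero)); [apply sfsum_zero|]. intros k _.
  rewrite dd_oddpart_zero, mul_zero_r, scal_zero by (auto; apply reg1_div; auto). reflexivity. Qed.

Theorem equivariance_const_div lam mu t :
  LD m N lam mu X (Qt m N t S) g = Qt m N t (Lsym m N (mu - lam) X S) g.
Proof. unfold LD, Lsym.
  rewrite (equivariance_defect m N (evVF m N X) false S g reg2_evVF hom_evVF HS Hg).
  rewrite (equivariance_defect m N (odVF m N X) true S g reg2_odVF hom_odVF HS Hg).
  rewrite anomaly_evVF, anomaly_odVF, !mul_zero_l, !scal_zero, !add_zero_r.
  rewrite Qt_add; auto; intros; apply reg1_LsymH; auto using reg2_evVF, reg2_odVF. Qed.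

End ConstantDivergence.

(* The theorem for regular arguments: X^h (truncated to its n = p + q + 2r
   components) is regular and has constant divergence when d = 0. *)
Lemma equivariance_Xh (p q r : nat) (hd : (p + q = 2 * r)%nat) (lam mu t : R)
  (v : nat -> R) (A : nat -> nat -> R) (w : nat -> R) (S : Sym1) (g : SF)
  (HS : forall k, Reg2 (p + q) (2 * r) (S k)) (Hg : Reg2 (p + q) (2 * r) g) :
  LD (p + q) (2 * r) lam mu (truncF (p + q + 2 * r) (Xh p q r v A w)) (Qt (p + q) (2 * r) t S) g =
  Qt (p + q) (2 * r) t (Lsym (p + q) (2 * r) (mu - lam) (truncF (p + q + 2 * r) (Xh p q r v A w)) S) g.
Proof. apply equivariance_const_div; auto.
  - apply reg2_truncF. intros. apply reg2_Xh; auto.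
  - intros k. rewrite (div_extX _ _ _ (Xh p q r v A w)) by (intros; apply truncF_eq; auto).
    apply dd_divX_Xh; auto. Qed.

(* Main theorem: replace S, g by their truncations and X^h by its first
   p + q + 2r components, which changes neither side on the components
   K < 2^(2r), and apply equivariance_Xh. *)
Theorem mainTheorem15 (p q r : nat) (hd : (p + q = 2 * r)%nat)
  (lam mu t : R)
  (v : nat -> R) (A : nat -> nat -> R) (w : nat -> R) (hA : in_g0 p q r A)
  (S : nat -> SF) (hS : forall k, (k < p + q + 2 * r)%nat -> IsSF (p + q) (S k))
  (g : SF) (hg : IsSF (p + q) g) :
  forall (K : nat) (x : pt), (K < Nat.pow 2 (2 * r))%nat ->
    LD (p + q) (2 * r) lam mu (Xh p q r v A w) (Qt (p + q) (2 * r) t S) g K x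
    = Qt (p + q) (2 * r) t (Lsym (p + q) (2 * r) (mu - lam) (Xh p q r v A w) S) g K x.
Proof.
  intros K x HK.
  set (X' := truncF (p + q + 2 * r) (Xh p q r v A w)).
  set (S' := truncF (p + q + 2 * r) (fun k => trunc (2 * r) (S k))).
  assert (HX : forall k, (k < p + q + 2 * r)%nat -> Xh p q r v A w k = X' k)
    by (intros; symmetry; apply truncF_eq; auto).
  assert (HS' : forall k, (k < p + q + 2 * r)%nat -> eqN (2 * r) (S k) (S' k))
    by (intros; unfold S'; rewrite truncF_eq by auto; symmetry; apply trunc_eqN).
  rewrite (LD_extX _ _ _ _ _ X') by auto.
  rewrite (eqN_LD _ _ _ _ X' t S S' g (trunc (2 * r) g) HS' (symmetry (trunc_eqN _ g)) K x HK).
  unfold X'. rewrite equivariance_Xh; fold X';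
    [|exact hd|unfold S'; apply reg2_truncF; intros; apply reg2_of_IsSF, hS; auto|apply reg2_of_IsSF; auto].
  rewrite (Qt_extS _ _ t (Lsym _ _ (mu - lam) (Xh p q r v A w) S) (Lsym _ _ (mu - lam) X' S)) by (intros; apply Lsym_extX; auto).
  symmetry. apply eqN_Qt; [intros k Hk; apply eqN_Lsym; auto|symmetry; apply trunc_eqN|exact HK].
Qed.
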